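(* Assume $p\ge11$ and $2\le a\le p-5$. For an integer $k\equiv k_\varepsilon\pmod{p-1}$ and $1\le l\le\frac12d_k^{\mathrm{new}}$ put $\sigma_{k,l}=\Delta_{k,l}-\Delta_{k,l-1}$ (so $\sigma_{k,1}\le\sigma_{k,2}\le\dots$), and let $\mu'_k$ be the uniform probability measure on the multiset $Z'_k$ of size $d_k^{\mathrm{new}}$ in which each value $\frac{2}{p-1}\cdot\frac{p+1}{k}\sigma_{k,l}$, $1\le l\le\frac12d_k^{\mathrm{new}}$, is counted twice. Then $\mu'_k$ converges weakly to the uniform probability measure on $[0,1]$ as $k\to\infty$ through $k\equiv k_\varepsilon\pmod{p-1}$.
   Context: $p$ prime, $v_p(p)=1$. For $m\in\mathbb Z$, $\{m\}\in\{0,\dots,p-2\}$ is the residue of $m$ mod $p-1$. Fix $s_\varepsilon\in\{0,\dots,p-2\}$. $k_\varepsilon=2+\{a+2s_\varepsilon\}$, $\delta_\varepsilon=\lfloor(s_\varepsilon+\{a+s_\varepsilon\})/(p-1)\rfloor$; if $a+s_\varepsilon<p-1$, $t_1=s_\varepsilon+\delta_\varepsilon$, $t_2=a+s_\varepsilon+\delta_\varepsilon+2$; else $t_1=\{a+s_\varepsilon\}+\delta_\varepsilon+1$, $t_2=a+s_\varepsilon+\delta_\varepsilon+1$. For $k\ge2$, $k=k_\bullet(p-1)+k_\varepsilon$: $d_k^{\mathrm{Iw}}=2k_\bullet+2-2\delta_\varepsilon$; $d_k^{\mathrm{ur}}=2\lfloor(k_\bullet-t_1)/(p+1)\rfloor+1+\eta_k$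 ($\eta_k=1$ if $k_\bullet-(p+1)\lfloor(k_\bullet-t_1)/(p+1)\rfloor\ge t_2$, else $0$); $d_k^{\mathrm{new}}=d_k^{\mathrm{Iw}}-2d_k^{\mathrm{ur}}$. $w_k=\exp(p(k-2))-1$. For $n\ge1$, $m_n(k)=\min\{n-d_k^{\mathrm{ur}},d_k^{\mathrm{Iw}}-d_k^{\mathrm{ur}}-n\}$ if $d_k^{\mathrm{ur}}<n<d_k^{\mathrm{Iw}}-d_k^{\mathrm{ur}}$ and $0$ otherwise; $g_n(w)=\prod_{k\ge2,\,k\equiv k_\varepsilon}(w-w_k)^{m_n(k)}$. Derivative polygon: $g_{n,\hat k}(w)=g_n(w)/(w-w_k)^{m_n(k)}$; $\Delta'_{k,l}=v_p(g_{\frac12d_k^{\mathrm{Iw}}+l,\hat k}(w_k))-\frac{k-2}{2}l$ for $|l|\le\frac12d_k^{\mathrm{new}}$; $\Delta_{k,l}$ is the value at $l$ of the lower convex hull $\underline\Delta_k$ of the points $(l,\Delta'_{k,l})$. *)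

From Stdlib Require Import Reals ZArith List Znumtheory.
From Coquelicot Require Import Coquelicot.
Open Scope Z_scope.

(* p-adic valuation of a nonzero integer (fuel |z| suffices since p >= 2) *)
Fixpoint vp_fuel (fuel : nat) (p z : Z) : nat :=
  match fuel with
  | O => O
  | S f => if z =? 0 then O
           else if z mod p =? 0 then S (vp_fuel f p (z / p)) else O
  end.
Definition vp (p z : Z) : nat := vp_fuel (Z.to_nat (Z.abs z)) p z.

Definition zrange (a b : Z) : list Z :=
  map (fun n => a + Z.of_nat n) (seq 0 (Z.to_nat (b - a + 1))).

Section Defs.
Variables (p a s : Z).

Definition res (m : Z) : Z := m mod (p - 1).
Definition k_eps : Z := 2 + res (a + 2 * s).
Definition delta_eps : Z := (s + res (a + s)) / (p - 1).
Definition t1 : Z :=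
  if a + s <? p - 1 then s + delta_eps else res (a + s) + delta_eps + 1.
Definition t2 : Z :=
  if a + s <? p - 1 then a + s + delta_eps + 2 else a + s + delta_eps + 1.

(* weights are indexed by kb = k_bullet; k = kb (p-1) + k_eps;
   k >= 2 corresponds exactly to kb >= 0 *)
Definition kof (kb : Z) : Z := kb * (p - 1) + k_eps.
Definition dIw (kb : Z) : Z := 2 * kb + 2 - 2 * delta_eps.
Definition dur (kb : Z) : Z :=
  let q := (kb - t1) / (p + 1) in
  2 * q + 1 + (if t2 <=? kb - (p + 1) * q then 1 else 0).
Definition dnew (kb : Z) : Z := dIw kb - 2 * dur kb.

Definition mult (n kb : Z) : Z :=
  if andb (dur kb <? n) (n <? dIw kb - dur kb)
  then Z.min (n - dur kb) (dIw kb - dur kb - n) else 0.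

(* m_n(k') = 0 as soon as kb' >= bound n *)
Definition bound (n : Z) : Z := (p + 1) * (Z.abs n + 3) + p.

(* v_p(w_k - w_k') = v_p(p (k - k')) = 1 + v_p(k - k')  (p odd) *)
Definition vw (kb kb' : Z) : Z := 1 + Z.of_nat (vp p (kof kb - kof kb')).

(* v_p (g_{n, hat k}(w_k)) *)
Definition vg (n kb : Z) : Z :=
  fold_right Z.add 0
    (map (fun kb' => if kb' =? kb then 0 else mult n kb' * vw kb kb')
         (zrange 0 (bound n - 1))).

Open Scope R_scope.

Definition Dprime (kb l : Z) : R :=
  IZR (vg (dIw kb / 2 + l) kb) - (IZR (kof kb) - 2) / 2 * IZR l.

(* value at l of the lower convex hull of the points (i, Delta'_{k,i}),
   |i| <= d^new/2 : minimum over chords through l *)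
Definition Delta (kb l : Z) : R :=
  let D := (dnew kb / 2)%Z in
  fold_right Rmin (Dprime kb l)
    (flat_map (fun i => map (fun j =>
        if (i =? j)%Z then Dprime kb i
        else (IZR (j - l) * Dprime kb i + IZR (l - i) * Dprime kb j) / IZR (j - i))
      (zrange l D)) (zrange (- D) l)).

Definition sigma (kb l : Z) : R := Delta kb l - Delta kb (l - 1).

Definition zpt (kb l : Z) : R :=
  2 / (IZR p - 1) * ((IZR p + 1) / IZR (kof kb)) * sigma kb l.

(* integral of f against mu'_k: uniform probability on the multiset Z'_k of
   size d^new_k, each zpt kb l (1 <= l <= d^new/2) counted twice *)
Definition mu_int (f : R -> R) (kb : Z) : R :=
  / IZR (dnew kb) *
  fold_right Rplus 0 (map (fun l => 2 * f (zpt kb l)) (zrange 1 (dnew kb / 2)%Z)).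

End Defs.

(* Write n = d^Iw_k / 2 + l. As v_p(w_k - w_k') = 1 + v_p(k - k') counts the levels i with
   k' = k mod p^i, the increment of n |-> v_p(g_n(w_k)) is a sum over levels of the number of
   such k' at which the tent-shaped multiplicity m_n(k') rises at n, minus the number at which
   it falls. These are lattice-point counts in intervals of lengths about (p - 1) n / 2 and
   (p - 1) n / (2 p), so the increment is (p - 1) n / 2 + O(p log k), and Δ'_k lies within
   O(k log k) of a convex quadratic with second differences (p - 1) / 2. Hence so does its lower
   convex hull Δ_k, and convexity squeezes σ_{k,l} between secant slopes over windows of width
   h = (log k)^2: σ_{k,l} = (p - 1) l / 2 + O(p h + k log k / h). With d = d^new_k / 2, which is
   about k / (p + 1), the points of Z'_k are l / d + O(1 / log k) for l <= d - h, so μ'_k has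
   the limit of the Riemann sums of f at the points l / d. *)

From Pilot Require Import Defs.
From Stdlib Require Import Reals ZArith List Znumtheory Zpow_facts.
From Coquelicot Require Import Coquelicot.
From Stdlib Require Import Lia Lra Psatz Bool.

Open Scope Z_scope.

Fixpoint sumZ (f : Z -> Z) (N : nat) : Z :=
  match N with O => 0 | S N' => sumZ f N' + f (Z.of_nat N') end.

Lemma fold_right_Zadd_zrange0 (f : Z -> Z) (B : Z) : 0 <= B ->
  fold_right Z.add 0 (map f (zrange 0 (B - 1))) = sumZ f (Z.to_nat B).
Proof.
  intros HB. unfold zrange. replace (B - 1 - 0 + 1) with B by lia.
  rewrite map_map. generalize (Z.to_nat B) as N. intros N.
  assert (Hinit : forall l x, fold_right Z.add x l = x + fold_right Z.add 0 l).
  { induction l; simpl; intros; [lia|]. rewrite IHl. lia. }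
  induction N; [reflexivity|].
  rewrite seq_S, map_app, fold_right_app. simpl in *. rewrite Hinit, IHN. lia.
Qed.

Lemma sumZ_ext (f g : Z -> Z) N :
  (forall x, 0 <= x < Z.of_nat N -> f x = g x) -> sumZ f N = sumZ g N.
Proof.
  induction N; intros H; simpl; auto.
  rewrite IHN, H; try lia. intros; apply H; lia.
Qed.

Lemma sumZ_le (f g : Z -> Z) N :
  (forall x, 0 <= x < Z.of_nat N -> f x <= g x) -> sumZ f N <= sumZ g N.
Proof.
  induction N; intros H; simpl; [lia|].
  specialize (IHN (fun x Hx => H x ltac:(lia))). specialize (H (Z.of_nat N) ltac:(lia)). lia.
Qed.

Lemma sumZ_sub (f g : Z -> Z) N : sumZ (fun x => f x - g x) N = sumZ f N - sumZ g N.
Proof. induction N; simpl; lia. Qed.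

Lemma sumZ_scal (c : Z) (f : Z -> Z) N : sumZ (fun x => c * f x) N = c * sumZ f N.
Proof. induction N; simpl; lia. Qed.

Lemma sumZ_eq0_tail (f : Z -> Z) N M : (N <= M)%nat ->
  (forall x, Z.of_nat N <= x < Z.of_nat M -> f x = 0) -> sumZ f M = sumZ f N.
Proof.
  intros HNM; induction HNM; intros H; auto.
  simpl. rewrite IHHNM, H; try lia. intros; apply H; lia.
Qed.

Lemma sumZ_swap (f : Z -> Z -> Z) N M :
  sumZ (fun x => sumZ (fun i => f i x) M) N = sumZ (fun i => sumZ (fun x => f i x) N) M.
Proof.
  induction N; simpl.
  - induction M; simpl; lia.
  - rewrite IHN. clear IHN. induction M; simpl; lia.
Qed.

Lemma b2z_range (b : bool) : 0 <= Z.b2z b <= 1.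
Proof. destruct b; simpl; lia. Qed.

Lemma sumZ_b2z_eqb (K : Z) (B : nat) : sumZ (fun x => Z.b2z (x =? K)) B <= 1.
Proof.
  enough (E : sumZ (fun x => Z.b2z (x =? K)) B = Z.b2z ((0 <=? K) && (K <? Z.of_nat B)))
    by (rewrite E; apply b2z_range).
  induction B; simpl sumZ.
  - destruct (Z.leb_spec 0 K); destruct (Z.ltb_spec K (Z.of_nat 0)); simpl; lia.
  - rewrite IHB.
    destruct (Z.leb_spec 0 K); destruct (Z.ltb_spec K (Z.of_nat B));
    destruct (Z.ltb_spec K (Z.of_nat (S B))); destruct (Z.eqb_spec (Z.of_nat B) K); simpl; lia.
Qed.

Lemma in_zrange (x a b : Z) : In x (zrange a b) <-> a <= x <= b.
Proof.
  unfold zrange. rewrite in_map_iff. split.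
  - intros [n [<- Hn]]. apply in_seq in Hn. lia.
  - intros H. exists (Z.to_nat (x - a)). split; [lia|]. apply in_seq. lia.
Qed.

Open Scope R_scope.

Fixpoint sumR (f : Z -> R) (N : nat) : R :=
  match N with O => 0 | S N' => sumR f N' + f (Z.of_nat N') end.

Lemma fold_right_Rplus_zrange (g : Z -> R) (a b : Z) :
  fold_right Rplus 0 (map g (zrange a b)) = sumR (fun j => g (a + j)%Z) (Z.to_nat (b - a + 1)).
Proof.
  unfold zrange. rewrite map_map. generalize (Z.to_nat (b - a + 1)) as N. intros N.
  assert (Hinit : forall l x, fold_right Rplus x l = x + fold_right Rplus 0 l).
  { induction l; simpl; intros; [lra|]. rewrite IHl. lra. }
  induction N; [reflexivity|].
  rewrite seq_S, map_app, fold_right_app. simpl in *. rewrite Hinit, IHN. lra.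
Qed.

Lemma IZR_sumZ f N : IZR (sumZ f N) = sumR (fun x => IZR (f x)) N.
Proof. induction N; simpl; auto. rewrite plus_IZR, IHN. auto. Qed.

Lemma sumR_le (f g : Z -> R) N :
  (forall x, (0 <= x < Z.of_nat N)%Z -> f x <= g x) -> sumR f N <= sumR g N.
Proof.
  induction N; intros H; simpl; [lra|].
  pose proof (IHN (fun x Hx => H x ltac:(lia))). pose proof (H (Z.of_nat N) ltac:(lia)). lra.
Qed.

Lemma sumR_abs (f : Z -> R) N : Rabs (sumR f N) <= sumR (fun x => Rabs (f x)) N.
Proof.
  induction N; simpl; [rewrite Rabs_R0; lra|].
  eapply Rle_trans; [apply Rabs_triang|]. lra.
Qed.

Lemma sumR_plus (f g : Z -> R) N : sumR (fun x => f x + g x) N = sumR f N + sumR g N.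
Proof. induction N; simpl; lra. Qed.

Lemma sumR_minus (f g : Z -> R) N : sumR (fun x => f x - g x) N = sumR f N - sumR g N.
Proof. induction N; simpl; lra. Qed.

Lemma sumR_scal (c : R) (f : Z -> R) N : sumR (fun x => c * f x) N = c * sumR f N.
Proof. induction N; simpl; lra. Qed.

Lemma sumR_const (c : R) N : sumR (fun _ => c) N = INR N * c.
Proof. induction N; simpl sumR; [simpl; lra|]. rewrite S_INR. lra. Qed.

Lemma sumR_indicator_ge (c : R) (T : Z) N :
  sumR (fun j => if (T <=? j)%Z then c else 0) N = IZR (Z.max 0 (Z.of_nat N - Z.max T 0)) * c.
Proof.
  induction N; simpl sumR.
  { replace (Z.max 0 (Z.of_nat 0 - Z.max T 0)) with 0%Z by lia. simpl. lra. }
  rewrite IHN. destruct (Z.leb_spec T (Z.of_nat N)).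
  - replace (Z.max 0 (Z.of_nat (S N) - Z.max T 0)) with (Z.max 0 (Z.of_nat N - Z.max T 0) + 1)%Z
      by lia.
    rewrite plus_IZR. lra.
  - replace (Z.max 0 (Z.of_nat (S N) - Z.max T 0)) with (Z.max 0 (Z.of_nat N - Z.max T 0)) by lia.
    lra.
Qed.

Lemma sumR_close (f g : Z -> R) N c :
  (forall i, (0 <= i < Z.of_nat N)%Z -> Rabs (f i - g i) <= c) ->
  Rabs (sumR f N - sumR g N) <= INR N * c.
Proof.
  intros H. rewrite <- sumR_minus, <- sumR_const.
  eapply Rle_trans; [apply sumR_abs|]. now apply sumR_le.
Qed.

Lemma sumR_geom (X P : R) N : P > 1 ->
  sumR (fun i => X / (P ^ Z.to_nat i)) N = X * (1 - / P ^ N) * P / (P - 1).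
Proof.
  intros HP. induction N; simpl sumR.
  - simpl. field. lra.
  - rewrite IHN, Nat2Z.id. simpl pow.
    assert (P ^ N > 0) by (apply pow_lt; lra).
    field. split; lra.
Qed.

Lemma Rdiv_le_cross x y u v : 0 < y -> 0 < v -> x * v <= u * y -> x / y <= u / v.
Proof.
  intros Hy Hv H. apply Rle_div_l; [lra|]. unfold Rdiv.
  rewrite Rmult_assoc, (Rmult_comm (/ v)), <- Rmult_assoc. apply Rle_div_r; lra.
Qed.

Lemma fold_right_Rmin_le_init (x0 : R) (l : list R) : fold_right Rmin x0 l <= x0.
Proof. induction l; simpl; [lra|]. eapply Rle_trans; [apply Rmin_r|auto]. Qed.

Lemma fold_right_Rmin_le_in (x0 : R) (l : list R) x : In x l -> fold_right Rmin x0 l <= x.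
Proof.
  induction l; simpl; [tauto|]. intros [<-|H]; [apply Rmin_l|].
  eapply Rle_trans; [apply Rmin_r|auto].
Qed.

Lemma fold_right_Rmin_glb (x0 : R) (l : list R) m :
  m <= x0 -> (forall x, In x l -> m <= x) -> m <= fold_right Rmin x0 l.
Proof. induction l; simpl; intros H1 H2; auto. apply Rmin_glb; auto. Qed.

Lemma fold_right_Rmax_ge_in (x0 : R) (l : list R) x : In x l -> x <= fold_right Rmax x0 l.
Proof.
  induction l; simpl; [tauto|]. intros [<-|H]; [apply Rmax_l|].
  eapply Rle_trans; [auto|apply Rmax_r].
Qed.

Lemma fold_right_Rmax_lub (x0 : R) (l : list R) m :
  x0 <= m -> (forall x, In x l -> x <= m) -> fold_right Rmax x0 l <= m.
Proof. induction l; simpl; intros H1 H2; auto. apply Rmax_lub; auto. Qed.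

(** * p-adic valuations *)

Open Scope Z_scope.

Lemma vp_fuel_spec (fuel : nat) (p z : Z) : prime p -> z <> 0 ->
  Z.abs z < 2 ^ Z.of_nat fuel ->
  forall i : nat, (p ^ Z.of_nat i | z) <-> (i <= vp_fuel fuel p z)%nat.
Proof.
  intros Hp. assert (Hp1 : 1 < p) by (destruct Hp; auto).
  revert z. induction fuel; intros z Hz Hlt i; [simpl in Hlt; lia|].
  simpl. destruct (Z.eqb_spec z 0); [lia|].
  destruct i as [|j]; [split; [lia|intros; apply Z.divide_1_l]|].
  rewrite Nat2Z.inj_succ, Z.pow_succ_r by lia.
  destruct (Z.eqb_spec (z mod p) 0) as [Hm|Hm].
  - assert (Hz' : z = p * (z / p)) by (apply Z.div_exact; lia).
    assert (z / p <> 0) by (intro E; rewrite E in Hz'; lia).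
    assert (Z.abs (z / p) < 2 ^ Z.of_nat fuel).
    { rewrite Nat2Z.inj_succ, Z.pow_succ_r in Hlt by lia.
      rewrite Hz', Z.abs_mul, (Z.abs_eq p) in Hlt by lia. nia. }
    rewrite Hz' at 1. rewrite Z.mul_divide_cancel_l by lia.
    rewrite IHfuel by auto. lia.
  - split; intros H; [|lia]. exfalso. apply Hm, Z.mod_divide; [lia|].
    eapply Z.divide_trans; [|exact H]. apply Z.divide_factor_l.
Qed.

Lemma vp_spec (p z : Z) : prime p -> z <> 0 ->
  forall i : nat, (p ^ Z.of_nat i | z) <-> (i <= vp p z)%nat.
Proof.
  intros Hp Hz. apply vp_fuel_spec; auto.
  rewrite Z2Nat.id by lia. apply Z.pow_gt_lin_r; lia.
Qed.

Lemma vp_lt (p z : Z) (N : nat) : prime p -> z <> 0 -> Z.abs z < p ^ Z.of_nat N ->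
  (vp p z < N)%nat.
Proof.
  intros Hp Hz Hlt. assert (Hp1 : 1 < p) by (destruct Hp; auto).
  pose proof (proj2 (vp_spec p z Hp Hz (vp p z)) (le_n _)) as Hd.
  apply Z.divide_abs_r, Z.divide_pos_le in Hd; [|lia].
  destruct (Nat.lt_ge_cases (vp p z) N) as [|Hge]; auto.
  assert (p ^ Z.of_nat N <= p ^ Z.of_nat (vp p z)) by (apply Z.pow_le_mono_r; lia). lia.
Qed.

Lemma sumZ_b2z_leb (v : Z) (N : nat) : 0 <= v ->
  sumZ (fun i => Z.b2z (i <=? v)) N = Z.min (v + 1) (Z.of_nat N).
Proof.
  intros Hv. induction N; simpl sumZ; [lia|].
  rewrite IHN. destruct (Z.leb_spec (Z.of_nat N) v); simpl; lia.
Qed.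

Lemma succ_vp_as_count (p z : Z) (N : nat) : prime p -> z <> 0 -> Z.abs z < p ^ Z.of_nat N ->
  1 + Z.of_nat (vp p z) = sumZ (fun i => Z.b2z (z mod p ^ i =? 0)) N.
Proof.
  intros Hp Hz Hlt. assert (Hp1 : 1 < p) by (destruct Hp; auto).
  pose proof (vp_lt p z N Hp Hz Hlt) as HN.
  transitivity (sumZ (fun i => Z.b2z (i <=? Z.of_nat (vp p z))) N).
  - rewrite sumZ_b2z_leb; lia.
  - apply sumZ_ext. intros x Hx. f_equal.
    replace x with (Z.of_nat (Z.to_nat x)) by lia.
    pose proof (vp_spec p z Hp Hz (Z.to_nat x)) as Hs.
    rewrite <- Z.mod_divide in Hs by (apply Z.pow_nonzero; lia).
    destruct (Z.eqb_spec (z mod p ^ Z.of_nat (Z.to_nat x)) 0);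
    destruct (Z.leb_spec (Z.of_nat (Z.to_nat x)) (Z.of_nat (vp p z))); auto; exfalso.
    + apply Hs in e. lia.
    + apply n, Hs. lia.
Qed.

Lemma prime_pow_divide_mul_pred (p z : Z) (i : nat) : prime p ->
  (p ^ Z.of_nat i | z * (p - 1)) <-> (p ^ Z.of_nat i | z).
Proof.
  intros Hp. assert (Hp1 : 1 < p) by (destruct Hp; auto).
  split; [|apply Z.divide_mul_l].
  rewrite Z.mul_comm. intros H. apply (Gauss _ (p - 1)); auto.
  apply rel_prime_sym, rel_prime_Zpower_r; [lia|].
  apply rel_prime_le_prime; auto. lia.
Qed.

(** * Lattice points in intervals *)

Definition zcongb (m x y : Z) : bool := (x - y) mod m =? 0.

Definition congr_count (P : Z -> Z) (K m : Z) (B : nat) : Z :=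
  sumZ (fun x => Z.b2z (negb (x =? K)) * P x * Z.b2z (zcongb m x K)) B.

Lemma div_succ_sub_div y m : 1 <= m -> (y + 1) / m - y / m = Z.b2z ((y + 1) mod m =? 0).
Proof.
  intros Hm. pose proof (Z.div_mod y m ltac:(lia)). pose proof (Z.mod_pos_bound y m ltac:(lia)).
  set (q := y / m) in *. set (t := y mod m) in *.
  destruct (Z.eq_dec t (m - 1)) as [E|E].
  - replace (y + 1) with ((q + 1) * m) by lia.
    rewrite Z.div_mul, Z.mod_mul by lia. simpl. lia.
  - replace (y + 1) with ((t + 1) + q * m) by lia.
    rewrite Z.div_add, Z.mod_add, Z.div_small, Z.mod_small by lia.
    destruct (Z.eqb_spec (t + 1) 0); simpl; lia.
Qed.

Lemma count_congr_interval (K m al be : Z) (B : nat) : 1 <= m -> 0 <= al ->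
  sumZ (fun x => Z.b2z ((al <=? x) && (x <=? be)) * Z.b2z (zcongb m x K)) B =
  (Z.max (al - 1) (Z.min be (Z.of_nat B - 1)) - K) / m - (al - 1 - K) / m.
Proof.
  intros Hm Hal. induction B; simpl sumZ.
  - replace (Z.max (al - 1) (Z.min be (Z.of_nat 0 - 1))) with (al - 1) by lia. lia.
  - rewrite IHB, Nat2Z.inj_succ. unfold zcongb.
    destruct (Z.leb_spec al (Z.of_nat B)); destruct (Z.leb_spec (Z.of_nat B) be); simpl andb;
      [|replace (Z.max (al - 1) (Z.min be (Z.succ (Z.of_nat B) - 1))) with
         (Z.max (al - 1) (Z.min be (Z.of_nat B - 1))) by lia; simpl; lia ..].
    cbn [Z.b2z].
    replace (Z.max (al - 1) (Z.min be (Z.succ (Z.of_nat B) - 1))) with (Z.of_nat B) by lia.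
    replace (Z.max (al - 1) (Z.min be (Z.of_nat B - 1))) with (Z.of_nat B - 1) by lia.
    pose proof (div_succ_sub_div (Z.of_nat B - 1 - K) m Hm) as Hstep.
    replace (Z.of_nat B - 1 - K + 1) with (Z.of_nat B - K) in Hstep by lia. lia.
Qed.

Lemma count_congr_sandwich (P : Z -> Z) (K m : Z) (B : nat) al1 al2 be1 be2 :
  1 <= m -> 0 <= al1 <= al2 -> al2 <= be1 + 1 -> be1 <= be2 -> be2 < Z.of_nat B ->
  (forall x, 0 <= P x <= 1) ->
  (forall x, al2 <= x <= be1 -> P x = 1) ->
  (forall x, P x = 1 -> al1 <= x <= be2) ->
  be1 - al2 + 1 - 2 * m < m * congr_count P K m B < be2 - al1 + 1 + m.
Proof.
  intros Hm Hal Hab Hbb HB HP01 HP1 HP2. unfold congr_count.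
  set (cnt := sumZ _ B).
  assert (Up : cnt <= sumZ (fun x => Z.b2z ((al1 <=? x) && (x <=? be2)) * Z.b2z (zcongb m x K)) B).
  { apply sumZ_le. intros x _. pose proof (b2z_range (zcongb m x K)). pose proof (HP01 x).
    pose proof (b2z_range (negb (x =? K))).
    destruct (Z.eq_dec (P x) 1) as [E|E].
    - specialize (HP2 x E). rewrite E.
      replace ((al1 <=? x) && (x <=? be2)) with true; [change (Z.b2z true) with 1; nia|].
      symmetry. apply andb_true_iff. rewrite !Z.leb_le. lia.
    - assert (P x = 0) as -> by lia. pose proof (b2z_range ((al1 <=? x) && (x <=? be2))). nia. }
  assert (Lo : sumZ (fun x => Z.b2z ((al2 <=? x) && (x <=? be1)) * Z.b2z (zcongb m x K)
                              - Z.b2z (x =? K)) B <= cnt).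
  { apply sumZ_le. intros x _. pose proof (b2z_range (zcongb m x K)). pose proof (HP01 x).
    destruct (Z.eqb_spec x K); simpl negb.
    - pose proof (b2z_range ((al2 <=? x) && (x <=? be1))). simpl. nia.
    - destruct (Z.leb_spec al2 x); destruct (Z.leb_spec x be1); simpl andb; simpl Z.b2z;
        [rewrite HP1 by lia; lia|nia ..]. }
  rewrite sumZ_sub in Lo. pose proof (sumZ_b2z_eqb K B).
  rewrite count_congr_interval in Up, Lo by lia.
  replace (Z.max (al1 - 1) (Z.min be2 (Z.of_nat B - 1))) with be2 in Up by lia.
  replace (Z.max (al2 - 1) (Z.min be1 (Z.of_nat B - 1))) with be1 in Lo by lia.
  pose proof (Z.div_mod (be2 - K) m ltac:(lia)). pose proof (Z.mod_pos_bound (be2 - K) m).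
  pose proof (Z.div_mod (be1 - K) m ltac:(lia)). pose proof (Z.mod_pos_bound (be1 - K) m).
  pose proof (Z.div_mod (al1 - 1 - K) m ltac:(lia)). pose proof (Z.mod_pos_bound (al1 - 1 - K) m).
  pose proof (Z.div_mod (al2 - 1 - K) m ltac:(lia)). pose proof (Z.mod_pos_bound (al2 - 1 - K) m).
  nia.
Qed.

(** * Lower convex hulls of finite sequences *)

Open Scope R_scope.

Definition chord (y : Z -> R) (l i j : Z) : R :=
  if (i =? j)%Z then y i else (IZR (j - l) * y i + IZR (l - i) * y j) / IZR (j - i).

Definition hull (y : Z -> R) (D l : Z) : R :=
  fold_right Rmin (y l)
    (flat_map (fun i => map (fun j => chord y l i j) (zrange l D)) (zrange (- D) l)).

Definition convex_on (D : Z) (H : Z -> R) : Prop :=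
  forall a b c, (- D <= a)%Z -> (a < b)%Z -> (b < c)%Z -> (c <= D)%Z ->
    IZR (c - a) * H b <= IZR (c - b) * H a + IZR (b - a) * H c.

Lemma Delta_hull p a s kb l :
  Defs.Delta p a s kb l = hull (Dprime p a s kb) (dnew p a s kb / 2) l.
Proof. reflexivity. Qed.

Lemma hull_le y D l : hull y D l <= y l.
Proof. apply fold_right_Rmin_le_init. Qed.

Lemma hull_le_chord y D l i j : (- D <= i <= l)%Z -> (l <= j <= D)%Z -> (i < j)%Z ->
  IZR (j - i) * hull y D l <= IZR (j - l) * y i + IZR (l - i) * y j.
Proof.
  intros Hi Hj Hij. assert (0 < IZR (j - i)) by (apply IZR_lt; lia).
  rewrite Rmult_comm. apply Rle_div_r; [lra|].
  apply fold_right_Rmin_le_in, in_flat_map. exists i. split; [apply in_zrange; lia|].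
  apply in_map_iff. exists j. split; [|apply in_zrange; lia].
  unfold chord. destruct (Z.eqb_spec i j); [lia|reflexivity].
Qed.

Lemma hull_ge_convex_minorant y D l (Phi : Z -> R) : (- D <= l <= D)%Z ->
  (forall x, (- D <= x <= D)%Z -> Phi x <= y x) ->
  (forall i j, (- D <= i <= l)%Z -> (l <= j <= D)%Z -> (i < j)%Z ->
     IZR (j - i) * Phi l <= IZR (j - l) * Phi i + IZR (l - i) * Phi j) ->
  Phi l <= hull y D l.
Proof.
  intros Hl Hy Hc. apply fold_right_Rmin_glb; [apply Hy; lia|].
  intros x Hx. apply in_flat_map in Hx as [i [Hi Hx]]. apply in_map_iff in Hx as [j [<- Hj]].
  apply in_zrange in Hi. apply in_zrange in Hj. unfold chord.
  destruct (Z.eqb_spec i j); [subst; replace l with j by lia; apply Hy; lia|].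
  assert (0 < IZR (j - i)) by (apply IZR_lt; lia).
  assert (0 <= IZR (j - l)) by (apply IZR_le; lia).
  assert (0 <= IZR (l - i)) by (apply IZR_le; lia).
  pose proof (Hc i j ltac:(lia) ltac:(lia) ltac:(lia)).
  pose proof (Hy i ltac:(lia)). pose proof (Hy j ltac:(lia)).
  apply Rle_div_r; [lra|]. nra.
Qed.

(* The slope of the supporting line at [b] is the largest left difference quotient. *)
Lemma hull_supporting_line y D b : (- D < b <= D)%Z ->
  exists sl, forall x, (- D <= x <= D)%Z -> hull y D b + sl * IZR (x - b) <= y x.
Proof.
  intros Hb. set (m := hull y D b).
  set (cand := fun u => (m - y u) / IZR (b - u)).
  set (sl := fold_right Rmax (cand (b - 1)%Z) (map cand (zrange (- D) (b - 1)))).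
  exists sl. intros x Hx. destruct (Z.lt_trichotomy x b) as [Hxb|[->|Hxb]].
  - assert (0 < IZR (b - x)) by (apply IZR_lt; lia).
    assert (Hc : cand x <= sl) by (apply fold_right_Rmax_ge_in, in_map, in_zrange; lia).
    apply Rle_div_l in Hc; [|lra].
    replace (IZR (x - b)) with (- IZR (b - x)) by (rewrite !minus_IZR; ring). lra.
  - rewrite Z.sub_diag, Rmult_0_r, Rplus_0_r. apply hull_le.
  - assert (0 < IZR (x - b)) by (apply IZR_lt; lia).
    assert (Hcand : forall u, (- D <= u < b)%Z -> cand u <= (y x - m) / IZR (x - b)).
    { intros u Hu. unfold cand.
      pose proof (hull_le_chord y D b u x ltac:(lia) ltac:(lia) ltac:(lia)) as Hch. fold m in Hch.
      assert (0 < IZR (b - u)) by (apply IZR_lt; lia).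
      replace (IZR (x - u)) with (IZR (x - b) + IZR (b - u)) in Hch
        by (rewrite <- plus_IZR; f_equal; lia).
      apply Rdiv_le_cross; [lra|lra|nra]. }
    enough (Hsl : sl <= (y x - m) / IZR (x - b)) by (apply Rle_div_r in Hsl; lra).
    apply fold_right_Rmax_lub; [apply Hcand; lia|].
    intros z Hz. apply in_map_iff in Hz as [u [<- Hu]]. apply in_zrange in Hu. apply Hcand. lia.
Qed.

Lemma hull_convex y D : convex_on D (hull y D).
Proof.
  intros a b c Ha Hab Hbc Hc.
  destruct (hull_supporting_line y D b ltac:(lia)) as [sl Hsl].
  set (ell := fun x => hull y D b + sl * IZR (x - b)).
  assert (Hell : forall l, (- D <= l <= D)%Z -> ell l <= hull y D l).
  { intros l Hl. apply hull_ge_convex_minorant; auto.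
    intros i j _ _ _. unfold ell. rewrite !minus_IZR. right. ring. }
  pose proof (Hell a ltac:(lia)). pose proof (Hell c ltac:(lia)).
  assert (0 <= IZR (c - b)) by (apply IZR_le; lia).
  assert (0 <= IZR (b - a)) by (apply IZR_le; lia).
  apply Rle_trans with (IZR (c - b) * ell a + IZR (b - a) * ell c); [|nra].
  unfold ell. rewrite !minus_IZR. right. ring.
Qed.

Lemma convex_slope_between_secants D H l h : convex_on D H -> (1 <= h)%Z ->
  (- D <= l - 1 - h)%Z -> (l + h <= D)%Z ->
  H (l - 1)%Z - H (l - 1 - h)%Z <= IZR h * (H l - H (l - 1)%Z) <= H (l + h)%Z - H l.
Proof.
  intros Hconv Hh Hlo Hhi. split.
  - pose proof (Hconv (l - 1 - h)%Z (l - 1)%Z l ltac:(lia) ltac:(lia) ltac:(lia) ltac:(lia)) as Hc.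
    replace (l - (l - 1 - h))%Z with (h + 1)%Z in Hc by lia.
    replace (l - (l - 1))%Z with 1%Z in Hc by lia.
    replace (l - 1 - (l - 1 - h))%Z with h in Hc by lia. rewrite plus_IZR in Hc. lra.
  - pose proof (Hconv (l - 1)%Z l (l + h)%Z ltac:(lia) ltac:(lia) ltac:(lia) ltac:(lia)) as Hc.
    replace (l + h - (l - 1))%Z with (h + 1)%Z in Hc by lia.
    replace (l + h - l)%Z with h in Hc by lia.
    replace (l - (l - 1))%Z with 1%Z in Hc by lia. rewrite plus_IZR in Hc. lra.
Qed.

Lemma convex_near_quadratic_slope D H (q r C eps : R) l h :
  convex_on D H -> (1 <= h)%Z -> (- D <= l - 1 - h)%Z -> (l + h <= D)%Z ->
  (forall x, (- D <= x <= D)%Z ->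
     Rabs (H x - (q * IZR x * (IZR x + 1) + r * IZR x + C)) <= eps) ->
  Rabs (H l - H (l - 1)%Z - (2 * q * IZR l + r)) <= Rabs q * (IZR h + 1) + 2 * eps / IZR h.
Proof.
  intros Hconv Hh Hlo Hhi Happrox.
  pose proof (convex_slope_between_secants D H l h Hconv Hh Hlo Hhi) as [Hle Hge].
  assert (HhR : 1 <= IZR h) by (apply IZR_le; lia).
  pose proof (Happrox l ltac:(lia)) as A1. pose proof (Happrox (l - 1)%Z ltac:(lia)) as A2.
  pose proof (Happrox (l + h)%Z ltac:(lia)) as A3.
  pose proof (Happrox (l - 1 - h)%Z ltac:(lia)) as A4.
  apply Rabs_le_between in A1, A2, A3, A4.
  rewrite !minus_IZR in A2, A4. rewrite minus_IZR in A4. rewrite !plus_IZR in A3.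
  set (sg := H l - H (l - 1)%Z) in *.
  pose proof (Rle_abs q). pose proof (Rle_abs (- q)). rewrite Rabs_Ropp in *.
  assert (0 <= (Rabs q - q) * (IZR h * (IZR h + 1))) by (apply Rmult_le_pos; nra).
  assert (0 <= (Rabs q + q) * (IZR h * (IZR h + 1))) by (apply Rmult_le_pos; nra).
  assert (He : IZR h * (2 * eps / IZR h) = 2 * eps) by (field; lra).
  apply Rabs_le. split; apply (Rmult_le_reg_l (IZR h)); lra.
Qed.

Lemma hull_near_chord_convex y D (Phi : Z -> R) (eps : R) :
  (forall x, (- D <= x <= D)%Z -> Rabs (y x - Phi x) <= eps) ->
  (forall i l j, (i <= l <= j)%Z -> (i < j)%Z ->
     IZR (j - i) * Phi l <= IZR (j - l) * Phi i + IZR (l - i) * Phi j) ->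
  forall l, (- D <= l <= D)%Z -> Rabs (hull y D l - Phi l) <= eps.
Proof.
  intros Hy Hc l Hl. pose proof (Hy l Hl) as Hyl. apply Rabs_le_between in Hyl.
  pose proof (hull_le y D l).
  enough (Phi l - eps <= hull y D l) by (apply Rabs_le; lra).
  apply (hull_ge_convex_minorant y D l (fun x => Phi x - eps)); auto.
  - intros x Hx. specialize (Hy x Hx). apply Rabs_le_between in Hy. lra.
  - intros i j Hi Hj Hij. pose proof (Hc i l j ltac:(lia) Hij).
    replace (IZR (j - i)) with (IZR (j - l) + IZR (l - i)) in *
      by (rewrite <- plus_IZR; f_equal; lia).
    lra.
Qed.

Lemma quadratic_chord_convex (q r C : R) : 0 <= q ->
  forall i l j, (i <= l <= j)%Z -> (i < j)%Z ->
    let Q x := q * IZR x * (IZR x + 1) + r * IZR x + C in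
    IZR (j - i) * Q l <= IZR (j - l) * Q i + IZR (l - i) * Q j.
Proof.
  intros Hq i l j Hl Hij Q. unfold Q.
  assert (0 <= IZR (j - l)) by (apply IZR_le; lia).
  assert (0 <= IZR (l - i)) by (apply IZR_le; lia).
  assert (0 <= q * (IZR (j - l) * IZR (l - i) * IZR (j - i))).
  { apply Rmult_le_pos; [lra|]. repeat apply Rmult_le_pos; try lra. apply IZR_le. lia. }
  rewrite !minus_IZR in *. nra.
Qed.

Lemma Rabs_telescope_le (u : Z -> R) (D : Z) (e : R) :
  (forall l, (- D < l <= D)%Z -> Rabs (u l - u (l - 1)%Z) <= e) ->
  forall l, (- D <= l <= D)%Z -> Rabs (u l - u (- D)%Z) <= IZR (l + D) * e.
Proof.
  intros Hstep l Hl. replace l with (- D + Z.of_nat (Z.to_nat (l + D)))%Z by lia.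
  assert (Hn : (Z.to_nat (l + D) <= Z.to_nat (2 * D))%nat) by lia.
  clear Hl. induction (Z.to_nat (l + D)) as [|j IH].
  - rewrite Z.add_0_r, Z.add_opp_diag_l, Rmult_0_l, Rminus_diag, Rabs_R0. lra.
  - specialize (IH ltac:(lia)).
    pose proof (Hstep (- D + Z.of_nat (S j))%Z ltac:(lia)) as Hd.
    replace (- D + Z.of_nat (S j) - 1)%Z with (- D + Z.of_nat j)%Z in Hd by lia.
    replace (- D + Z.of_nat (S j) + D)%Z with ((- D + Z.of_nat j + D) + 1)%Z by lia.
    set (v := u (- D + Z.of_nat j)%Z) in *. set (w := u (- D + Z.of_nat (S j))%Z) in *.
    pose proof (Rabs_triang (v - u (- D)%Z) (w - v)).
    replace (v - u (- D)%Z + (w - v)) with (w - u (- D)%Z) in * by ring.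
    rewrite plus_IZR. lra.
Qed.

(** * Riemann sums *)

Lemma RInt_as_sum (f : R -> R) (n : nat) : (0 < n)%nat -> (forall x, continuous f x) ->
  forall k, (k <= n)%nat ->
  RInt f 0 (INR k / INR n) = sumR (fun j => RInt f (IZR j / INR n) ((IZR j + 1) / INR n)) k.
Proof.
  intros Hn Hc. induction k; intros Hk.
  - simpl. replace (0 / INR n) with 0 by (unfold Rdiv; ring). exact (RInt_point 0 f).
  - simpl sumR. rewrite <- IHk, <- INR_IZR_INZ, S_INR by lia.
    rewrite <- (RInt_Chasles f 0 (INR k / INR n) ((INR k + 1) / INR n)); [reflexivity| |];
      apply ex_RInt_continuous; intros; apply Hc.
Qed.

Lemma RInt_minus_right_endpoint (f : R -> R) (a b w : R) : a <= b -> (forall x, continuous f x) ->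
  (forall t, a <= t <= b -> Rabs (f t - f b) <= w) ->
  Rabs (RInt f a b - (b - a) * f b) <= (b - a) * w.
Proof.
  intros Hab Hc Hw.
  assert (Hex : ex_RInt f a b)
    by (apply (@ex_RInt_continuous R_CompleteNormedModule); intros; apply Hc).
  assert (Hex2 : ex_RInt (fun _ => f b) a b) by apply ex_RInt_const.
  assert (E : RInt (fun x => f x - f b) a b = RInt f a b - (b - a) * f b).
  { assert (H := RInt_minus f (fun _ => f b) a b Hex Hex2). simpl in H.
    unfold minus, plus, opp in H. simpl in H.
    transitivity (RInt (fun x => f x + - f b) a b); [reflexivity|]. rewrite H, RInt_const.
    unfold scal. simpl. unfold mult. simpl. ring. }
  rewrite <- E. apply abs_RInt_le_const; auto.
  apply (ex_RInt_minus f (fun _ => f b)); auto.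
Qed.

Lemma riemann_sum_error (f : R -> R) (n : nat) (w : R) :
  (0 < n)%nat -> (forall x, continuous f x) ->
  (forall x y, 0 <= x <= 1 -> 0 <= y <= 1 -> Rabs (x - y) <= 1 / INR n -> Rabs (f x - f y) <= w) ->
  Rabs (sumR (fun j => f ((IZR j + 1) / INR n)) n / INR n - RInt f 0 1) <= w.
Proof.
  intros Hn Hc Hw.
  assert (HnR : 0 < INR n) by (apply lt_0_INR; lia).
  replace (RInt f 0 1) with (sumR (fun j => RInt f (IZR j / INR n) ((IZR j + 1) / INR n)) n)
    by (rewrite <- (RInt_as_sum f n Hn Hc n (le_n _)); f_equal; field; lra).
  unfold Rdiv at 1. rewrite Rmult_comm, <- sumR_scal.
  replace w with (INR n * (1 / INR n * w)) by (field; lra).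
  apply sumR_close. intros j Hj.
  assert (Hj' : 0 <= IZR j <= INR n - 1).
  { split; [apply IZR_le; lia|]. rewrite INR_IZR_INZ, <- minus_IZR. apply IZR_le. lia. }
  set (a := IZR j / INR n). set (b := (IZR j + 1) / INR n).
  assert (Hab : b - a = 1 / INR n) by (unfold a, b; field; lra).
  assert (Ha0 : 0 <= a) by (unfold a; apply Rdiv_le_0_compat; lra).
  assert (Hb1 : b <= 1) by (unfold b; apply Rle_div_l; lra).
  assert (0 < 1 / INR n) by (apply Rdiv_lt_0_compat; lra).
  pose proof (RInt_minus_right_endpoint f a b w ltac:(lra) Hc) as HP. rewrite Hab in HP.
  replace (/ INR n * f b - RInt f a b) with (- (RInt f a b - 1 / INR n * f b)) by (field; lra).
  rewrite Rabs_Ropp. apply HP. intros t Ht. apply Hw; try lra.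
  rewrite Rabs_left1 by lra. lra.
Qed.

Lemma average_perturbation (f : R -> R) (z : Z -> R) (D h : Z) (w M : R) :
  (0 < D)%Z -> (0 <= h)%Z -> 0 <= w -> (forall x, Rabs (f x) <= M) ->
  (forall j, (0 <= j < D - h)%Z -> Rabs (f (z (1 + j)%Z) - f ((IZR j + 1) / IZR D)) <= w) ->
  Rabs (sumR (fun j => f (z (1 + j)%Z)) (Z.to_nat D) / IZR D
        - sumR (fun j => f ((IZR j + 1) / IZR D)) (Z.to_nat D) / IZR D)
    <= w + 2 * M * (IZR h / IZR D).
Proof.
  intros HD Hh Hw0 HM Hw.
  assert (HDR : 0 < IZR D) by (apply IZR_lt; lia).
  unfold Rdiv. rewrite <- Rmult_minus_distr_r, <- sumR_minus, Rabs_mult.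
  rewrite (Rabs_right (/ IZR D)) by (apply Rle_ge, Rlt_le, Rinv_0_lt_compat; lra).
  apply Rle_trans with
    (sumR (fun j => w + (if (D - h <=? j)%Z then 2 * M else 0)) (Z.to_nat D) * / IZR D).
  - apply Rmult_le_compat_r; [apply Rlt_le, Rinv_0_lt_compat; lra|].
    eapply Rle_trans; [apply sumR_abs|]. apply sumR_le. intros j Hj.
    rewrite Z2Nat.id in Hj by lia.
    destruct (Z.leb_spec (D - h) j).
    + pose proof (HM (z (1 + j)%Z)). pose proof (HM ((IZR j + 1) / IZR D)).
      pose proof (Rabs_triang (f (z (1 + j)%Z)) (- f ((IZR j + 1) / IZR D))).
      rewrite Rabs_Ropp in *. unfold Rminus. lra.
    + rewrite Rplus_0_r. apply Hw. lia.
  - rewrite sumR_plus, sumR_const, sumR_indicator_ge, INR_IZR_INZ, Z2Nat.id by lia.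
    assert (Hcount : IZR (Z.max 0 (D - Z.max (D - h) 0)) <= IZR h) by (apply IZR_le; lia).
    assert (0 <= M) by (pose proof (HM 0); pose proof (Rabs_pos (f 0)); lra).
    rewrite Rmult_plus_distr_r.
    replace (IZR D * w * / IZR D) with w by (field; lra).
    apply Rplus_le_compat_l.
    assert (0 < / IZR D) by (apply Rinv_0_lt_compat; lra).
    assert (0 <= (IZR h - IZR (Z.max 0 (D - Z.max (D - h) 0))) * (2 * M * / IZR D))
      by (apply Rmult_le_pos; [lra|apply Rmult_le_pos; lra]).
    lra.
Qed.

Lemma uniform_continuity_near_unit_interval (f : R -> R) (eps : R) :
  (forall x, continuous f x) -> 0 < eps ->
  exists dl, 0 < dl <= 1 /\
    forall x y, 0 <= y <= 1 -> Rabs (x - y) < dl -> Rabs (f x - f y) < eps.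
Proof.
  intros Hc He.
  assert (Hu : uniform_continuity f (fun c => -1 <= c <= 2)).
  { apply Heine; [apply compact_P3|]. intros x _. apply continuity_pt_filterlim, Hc. }
  destruct (Hu (mkposreal eps He)) as [dl Hdl]. simpl in Hdl.
  exists (Rmin dl 1). split; [split; [apply Rmin_glb_lt; [apply cond_pos|lra]|apply Rmin_r]|].
  intros x y Hy Hxy. pose proof (Rmin_l dl 1). pose proof (Rmin_r dl 1).
  apply Rabs_lt_between' in Hxy as Hx. apply Hdl; lra.
Qed.

Lemma sample_average_error (f : R -> R) (z : Z -> R) (D h : Z) (M w dl : R) :
  (forall x, continuous f x) -> (forall x, Rabs (f x) <= M) -> 0 <= w ->
  (forall x y, 0 <= y <= 1 -> Rabs (x - y) < dl -> Rabs (f x - f y) < w) ->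
  (0 < D)%Z -> (0 <= h)%Z -> 1 / IZR D < dl ->
  (forall l, (1 <= l <= D - h)%Z -> Rabs (z l - IZR l / IZR D) < dl) ->
  Rabs (sumR (fun j => f (z (1 + j)%Z)) (Z.to_nat D) / IZR D - RInt f 0 1)
    <= 2 * w + 2 * M * (IZR h / IZR D).
Proof.
  intros Hc HM Hw Hf HD Hh HDdl Hz.
  assert (HDR : 0 < IZR D) by (apply IZR_lt; lia).
  assert (HDn : INR (Z.to_nat D) = IZR D) by (rewrite INR_IZR_INZ; f_equal; lia).
  assert (Hriem : Rabs (sumR (fun j => f ((IZR j + 1) / IZR D)) (Z.to_nat D) / IZR D
                        - RInt f 0 1) <= w).
  { rewrite <- HDn. apply riemann_sum_error; auto; [lia|]. rewrite HDn.
    intros x y _ Hy Hxy. left. apply Hf; lra. }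
  assert (Hpert : Rabs (sumR (fun j => f (z (1 + j)%Z)) (Z.to_nat D) / IZR D
                        - sumR (fun j => f ((IZR j + 1) / IZR D)) (Z.to_nat D) / IZR D)
                  <= w + 2 * M * (IZR h / IZR D)).
  { apply average_perturbation; auto. intros j Hj. left. apply Hf.
    - split; [apply Rdiv_le_0_compat|apply Rle_div_l]; try lra.
      + assert (0 <= IZR j) by (apply IZR_le; lia). lra.
      + rewrite Rmult_1_l, <- plus_IZR. apply IZR_le. lia.
    - pose proof (Hz (1 + j)%Z ltac:(lia)) as Hzj. rewrite plus_IZR, Rplus_comm in Hzj. lra. }
  set (S := sumR (fun j => f (z (1 + j)%Z)) (Z.to_nat D) / IZR D) in *.
  set (S' := sumR (fun j => f ((IZR j + 1) / IZR D)) (Z.to_nat D) / IZR D) in *.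
  replace (S - RInt f 0 1) with ((S - S') + (S' - RInt f 0 1)) by ring.
  eapply Rle_trans; [apply Rabs_triang|]. lra.
Qed.

Lemma sample_average_tends_to_integral (f : R -> R) (D h : nat -> Z) (z : nat -> Z -> R)
    (eta : nat -> R) :
  (forall x, continuous f x) -> (exists M, forall x, Rabs (f x) <= M) ->
  is_lim_seq eta 0 ->
  eventually (fun n => (0 < D n)%Z /\ (0 <= h n)%Z /\ 1 / IZR (D n) <= eta n /\
     IZR (h n) / IZR (D n) <= eta n /\
     forall l, (1 <= l <= D n - h n)%Z -> Rabs (z n l - IZR l / IZR (D n)) <= eta n) ->
  is_lim_seq (fun n => sumR (fun j => f (z n (1 + j)%Z)) (Z.to_nat (D n)) / IZR (D n))
    (RInt f 0 1).
Proof.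
  intros Hc [M HM] Heta Hev. apply is_lim_seq_spec. intros eps.
  pose proof (cond_pos eps) as He.
  assert (HM0 : 0 <= M) by (pose proof (HM 0); pose proof (Rabs_pos (f 0)); lra).
  destruct (uniform_continuity_near_unit_interval f (eps / 4) Hc ltac:(lra)) as [dl [Hdl Hf]].
  pose proof (Rmin_l dl (eps / (8 * (M + 1)))). pose proof (Rmin_r dl (eps / (8 * (M + 1)))).
  set (r := Rmin dl (eps / (8 * (M + 1)))) in *.
  assert (Hr : 0 < r) by (apply Rmin_glb_lt; [lra|apply Rdiv_lt_0_compat; lra]).
  apply is_lim_seq_spec in Heta. destruct (filter_and _ _ (Heta (mkposreal r Hr)) Hev) as [N HN].
  exists N. intros n Hn. destruct (HN n Hn) as [Hsmall [HD [Hh [H1 [H2 Hz]]]]]. simpl in Hsmall.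
  rewrite Rminus_0_r in Hsmall. apply Rabs_lt_between in Hsmall.
  assert (Hmass : 2 * M * (IZR (h n) / IZR (D n)) < eps / 4).
  { apply Rle_lt_trans with (2 * M * (eps / (8 * (M + 1)))); [apply Rmult_le_compat_l; lra|].
    replace (2 * M * (eps / (8 * (M + 1)))) with (eps / 4 - eps / (4 * (M + 1))) by (field; lra).
    enough (0 < eps / (4 * (M + 1))) by lra. apply Rdiv_lt_0_compat; lra. }
  eapply Rle_lt_trans; [apply (sample_average_error f (z n) (D n) (h n) M (eps / 4) dl)|];
    auto; try lra.
  intros l Hl. specialize (Hz l Hl). lra.
Qed.

(** * The multiplicities [m_n(k)] and the increments of [v_p(g_n(w_k))] *)

Open Scope Z_scope.

Lemma tent_step u v n :
  Z.max 0 (Z.min (n - u) (v - n)) - Z.max 0 (Z.min (n - 1 - u) (v - (n - 1))) =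
  Z.b2z ((u + 1 <=? n) && (2 * n <=? u + v)) - Z.b2z ((u + v + 2 <=? 2 * n) && (n <=? v)).
Proof.
  destruct (Z.leb_spec (u + 1) n); destruct (Z.leb_spec (2 * n) (u + v));
  destruct (Z.leb_spec (u + v + 2) (2 * n)); destruct (Z.leb_spec n v); simpl; lia.
Qed.

Lemma cube_le_pow2 (n : Z) : 10 <= n -> n * n * n <= 2 ^ n.
Proof.
  intros H. replace n with (Z.of_nat (Z.to_nat n)) by lia.
  assert (Hn : (10 <= Z.to_nat n)%nat) by lia. revert Hn. generalize (Z.to_nat n). clear.
  induction 1; [simpl; lia|].
  rewrite Nat2Z.inj_succ, Z.pow_succ_r by lia.
  assert (Z.succ (Z.of_nat m) * Z.succ (Z.of_nat m) * Z.succ (Z.of_nat m)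
          <= 2 * (Z.of_nat m * Z.of_nat m * Z.of_nat m)) by nia.
  lia.
Qed.

Section Slopes.

Variables (p a s : Z).
Hypothesis Hp : prime p.
Hypothesis Hp11 : 11 <= p.
Hypothesis Hs : 0 <= s <= p - 2.

Notation δ := (delta_eps p a s).
Notation dur := (dur p a s).
Notation dIw := (dIw p a s).
Notation mult := (Defs.mult p a s).

Lemma res_range m : 0 <= res p m <= p - 2.
Proof. unfold res. pose proof (Z.mod_pos_bound m (p - 1)). lia. Qed.

Lemma delta_eps_range : 0 <= δ <= 1.
Proof.
  unfold delta_eps. pose proof (res_range (a + s)).
  split; [apply Z.div_pos; lia|]. apply Z.lt_succ_r, Z.div_lt_upper_bound; lia.
Qed.

Lemma dur_approx x : 2 * x - 4 * p <= (p + 1) * dur x <= 2 * x + 2 * (p + 1).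
Proof.
  assert (Ht1 : 0 <= t1 p a s <= p).
  { pose proof delta_eps_range. pose proof (res_range (a + s)).
    unfold t1. destruct (Z.ltb_spec (a + s) (p - 1)); lia. }
  unfold Defs.dur. set (q := (x - t1 p a s) / (p + 1)).
  pose proof (Z.div_mod (x - t1 p a s) (p + 1) ltac:(lia)).
  pose proof (Z.mod_pos_bound (x - t1 p a s) (p + 1) ltac:(lia)).
  fold q in H. destruct (Z.leb_spec (t2 p a s) (x - (p + 1) * q)); nia.
Qed.

Lemma mult_tent n x : mult n x = Z.max 0 (Z.min (n - dur x) (dIw x - dur x - n)).
Proof.
  unfold Defs.mult. destruct (Z.ltb_spec (dur x) n); destruct (Z.ltb_spec n (dIw x - dur x));
    simpl; lia.
Qed.

Definition rising (n x : Z) : Z := Z.b2z ((dur x + 1 <=? n) && (n <=? x + 1 - δ)).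
Definition falling (n x : Z) : Z := Z.b2z ((x + 2 - δ <=? n) && (n <=? dIw x - dur x)).

Lemma mult_step n x : mult n x - mult (n - 1) x = rising n x - falling n x.
Proof.
  rewrite !mult_tent.
  replace (dIw x - dur x - (n - 1)) with ((dIw x - dur x) - (n - 1)) by lia.
  rewrite (tent_step (dur x) (dIw x - dur x) n). unfold rising, falling, Defs.dIw.
  repeat match goal with |- context [Z.leb ?x ?y] => destruct (Z.leb_spec x y) end; simpl; lia.
Qed.

Lemma mult_eq0_beyond_bound n x : Defs.bound p n <= x -> mult n x = 0.
Proof.
  intros H. rewrite mult_tent. pose proof (dur_approx x). unfold Defs.bound in H.
  assert (dur x >= n) by nia. lia.
Qed.

Lemma vg_as_sum n K (B : nat) : Defs.bound p n <= Z.of_nat B ->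
  vg p a s n K = sumZ (fun x => if x =? K then 0 else mult n x * vw p a s K x) B.
Proof.
  intros HB. unfold vg. rewrite fold_right_Zadd_zrange0 by (unfold Defs.bound; lia).
  symmetry. apply sumZ_eq0_tail; [lia|].
  intros x Hx. destruct (x =? K); auto. rewrite mult_eq0_beyond_bound; lia.
Qed.

Lemma vw_as_level_count K x (N : nat) : x <> K -> Z.abs ((K - x) * (p - 1)) < p ^ Z.of_nat N ->
  vw p a s K x = sumZ (fun i => Z.b2z (zcongb (p ^ i) x K)) N.
Proof.
  intros Hx Hlt. assert (Hp1 : 1 < p) by (destruct Hp; auto).
  unfold vw. replace (kof p a s K - kof p a s x) with ((K - x) * (p - 1)) by (unfold kof; ring).
  rewrite (succ_vp_as_count p _ N Hp) by (auto; nia).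
  apply sumZ_ext. intros i Hi. unfold zcongb. f_equal.
  replace i with (Z.of_nat (Z.to_nat i)) by lia.
  assert (Hnz : p ^ Z.of_nat (Z.to_nat i) <> 0) by (apply Z.pow_nonzero; lia).
  assert (Hiff : (p ^ Z.of_nat (Z.to_nat i) | (K - x) * (p - 1)) <->
                 (p ^ Z.of_nat (Z.to_nat i) | x - K)).
  { rewrite prime_pow_divide_mul_pred by auto.
    replace (x - K) with (- (K - x)) by ring. rewrite Z.divide_opp_r. reflexivity. }
  rewrite <- !(Z.mod_divide _ _ Hnz) in Hiff.
  destruct (Z.eqb_spec ((K - x) * (p - 1) mod p ^ Z.of_nat (Z.to_nat i)) 0);
  destruct (Z.eqb_spec ((x - K) mod p ^ Z.of_nat (Z.to_nat i)) 0); tauto.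
Qed.

Lemma vg_step_as_levels n K (N : nat) : 1 <= n ->
  (forall x, 0 <= x < Defs.bound p n -> x <> K ->
     Z.abs ((K - x) * (p - 1)) < p ^ Z.of_nat N) ->
  vg p a s n K - vg p a s (n - 1) K =
  sumZ (fun i => congr_count (rising n) K (p ^ i) (Z.to_nat (Defs.bound p n))
               - congr_count (falling n) K (p ^ i) (Z.to_nat (Defs.bound p n))) N.
Proof.
  intros Hn HN. set (B := Z.to_nat (Defs.bound p n)).
  rewrite (vg_as_sum n K B), (vg_as_sum (n - 1) K B) by (unfold B, Defs.bound; lia).
  rewrite <- sumZ_sub. unfold congr_count.
  rewrite (sumZ_ext _ (fun x => sumZ (fun i =>
      Z.b2z (negb (x =? K)) * rising n x * Z.b2z (zcongb (p ^ i) x K) -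
      Z.b2z (negb (x =? K)) * falling n x * Z.b2z (zcongb (p ^ i) x K)) N)).
  - rewrite sumZ_swap. apply sumZ_ext. intros i _. apply sumZ_sub.
  - intros x Hx. destruct (Z.eqb_spec x K); simpl negb; cbn [Z.b2z].
    + transitivity (sumZ (fun _ => 0) N); [clear; induction N; simpl; lia|].
      apply sumZ_ext. intros. lia.
    + rewrite <- Z.mul_sub_distr_r, mult_step, (vw_as_level_count K x N) by (auto; apply HN; lia).
      rewrite <- sumZ_scal. apply sumZ_ext. intros. ring.
Qed.

(* [k' = x] rises at [n] for [x] between [n - 1 + δ] and about [(p + 1) n / 2], and falls at
   [n] for [x] between about [(p + 1) n / (2 p)] and [n - 2 + δ]; the primed endpoints absorb
   the fluctuation of [dur]. *)
Definition rise_end n := ((p + 1) * (n - 5)) / 2.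
Definition rise_end' n := ((p + 1) * (n + 3)) / 2.
Definition fall_start n := ((p + 1) * (n + 2)) / (2 * p) + 1.
Definition fall_start' n := ((p + 1) * (n - 6)) / (2 * p).
Definition rise_length n := rise_end n - n + 2 - δ.
Definition fall_length n := n - 1 + δ - fall_start n.

Lemma rising_support n x : 10 <= n ->
  (n - 1 + δ <= x <= rise_end n -> rising n x = 1) /\
  (rising n x = 1 -> n - 1 + δ <= x <= rise_end' n).
Proof.
  intros Hn. pose proof delta_eps_range. pose proof (dur_approx x).
  pose proof (Z.div_mod ((p + 1) * (n - 5)) 2 ltac:(lia)).
  pose proof (Z.mod_pos_bound ((p + 1) * (n - 5)) 2 ltac:(lia)).
  pose proof (Z.div_mod ((p + 1) * (n + 3)) 2 ltac:(lia)).
  pose proof (Z.mod_pos_bound ((p + 1) * (n + 3)) 2 ltac:(lia)).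
  unfold rising, rise_end, rise_end'. split.
  - intros Hx. replace ((dur x + 1 <=? n) && (n <=? x + 1 - δ)) with true; [reflexivity|].
    symmetry. apply andb_true_iff. rewrite !Z.leb_le. split; [|lia].
    enough ((p + 1) * dur x < (p + 1) * n) by nia. nia.
  - destruct ((dur x + 1 <=? n) && (n <=? x + 1 - δ)) eqn:E; [|discriminate]. intros _.
    apply andb_true_iff in E. rewrite !Z.leb_le in E. split; [lia|].
    assert ((p + 1) * dur x <= (p + 1) * (n - 1)) by (apply Z.mul_le_mono_nonneg_l; lia). nia.
Qed.

Lemma falling_support n x : 10 <= n ->
  (fall_start n <= x <= n - 2 + δ -> falling n x = 1) /\
  (falling n x = 1 -> fall_start' n <= x <= n - 2 + δ).
Proof.
  intros Hn. pose proof delta_eps_range. pose proof (dur_approx x).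
  pose proof (Z.div_mod ((p + 1) * (n + 2)) (2 * p) ltac:(lia)).
  pose proof (Z.mod_pos_bound ((p + 1) * (n + 2)) (2 * p) ltac:(lia)).
  pose proof (Z.div_mod ((p + 1) * (n - 6)) (2 * p) ltac:(lia)).
  pose proof (Z.mod_pos_bound ((p + 1) * (n - 6)) (2 * p) ltac:(lia)).
  unfold falling, fall_start, fall_start', Defs.dIw. split.
  - intros Hx. replace ((x + 2 - δ <=? n) && (n <=? 2 * x + 2 - 2 * δ - dur x)) with true;
      [reflexivity|].
    symmetry. apply andb_true_iff. rewrite !Z.leb_le. split; [lia|].
    enough ((p + 1) * n <= (p + 1) * (2 * x + 2 - 2 * δ - dur x)) by nia. nia.
  - destruct ((x + 2 - δ <=? n) && (n <=? 2 * x + 2 - 2 * δ - dur x)) eqn:E; [|discriminate].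
    intros _. apply andb_true_iff in E. rewrite !Z.leb_le in E. split; [|lia].
    assert ((p + 1) * n <= (p + 1) * (2 * x + 2 - 2 * δ - dur x))
      by (apply Z.mul_le_mono_nonneg_l; lia).
    nia.
Qed.

Lemma rising_count_approx n K m : 10 <= n -> 1 <= m ->
  rise_length n - 2 * m < m * congr_count (rising n) K m (Z.to_nat (Defs.bound p n))
    < rise_length n + (rise_end' n - rise_end n) + 2 * m.
Proof.
  intros Hn Hm. pose proof delta_eps_range.
  assert (Q1 : 2 * rise_end n <= (p + 1) * (n - 5) <= 2 * rise_end n + 1).
  { unfold rise_end. pose proof (Z.mod_pos_bound ((p + 1) * (n - 5)) 2 ltac:(lia)).
    pose proof (Z.div_mod ((p + 1) * (n - 5)) 2 ltac:(lia)). lia. }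
  assert (Q2 : 2 * rise_end' n <= (p + 1) * (n + 3) <= 2 * rise_end' n + 1).
  { unfold rise_end'. pose proof (Z.mod_pos_bound ((p + 1) * (n + 3)) 2 ltac:(lia)).
    pose proof (Z.div_mod ((p + 1) * (n + 3)) 2 ltac:(lia)). lia. }
  assert (Q3 : (p + 1) * (n - 5) >= 12 * (n - 5)) by nia.
  assert (Q4 : (p + 1) * (n + 3) = (p + 1) * (n - 5) + 8 * (p + 1)) by ring.
  assert (HB : rise_end' n < Z.of_nat (Z.to_nat (Defs.bound p n))).
  { unfold Defs.bound. rewrite Z.abs_eq, Z2Nat.id by nia. lia. }
  unfold rise_length.
  enough (rise_end n - (n - 1 + δ) + 1 - 2 * m
          < m * congr_count (rising n) K m (Z.to_nat (Defs.bound p n))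
          < rise_end' n - (n - 1 + δ) + 1 + m) by lia.
  apply count_congr_sandwich; try lia.
  - intros x. apply b2z_range.
  - intros x. apply (rising_support n x Hn).
  - intros x. apply (rising_support n x Hn).
Qed.

Lemma falling_count_approx n K m : 10 <= n -> 1 <= m ->
  fall_length n - 2 * m < m * congr_count (falling n) K m (Z.to_nat (Defs.bound p n))
    < fall_length n + (fall_start n - fall_start' n) + 2 * m.
Proof.
  intros Hn Hm. pose proof delta_eps_range.
  assert (Q1 : 2 * p * (fall_start n - 1) <= (p + 1) * (n + 2) < 2 * p * fall_start n).
  { unfold fall_start. pose proof (Z.mod_pos_bound ((p + 1) * (n + 2)) (2 * p) ltac:(lia)).
    pose proof (Z.div_mod ((p + 1) * (n + 2)) (2 * p) ltac:(lia)). lia. }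
  assert (Q2 : 2 * p * fall_start' n <= (p + 1) * (n - 6) < 2 * p * (fall_start' n + 1)).
  { unfold fall_start'. pose proof (Z.mod_pos_bound ((p + 1) * (n - 6)) (2 * p) ltac:(lia)).
    pose proof (Z.div_mod ((p + 1) * (n - 6)) (2 * p) ltac:(lia)). lia. }
  assert (Q0 : 0 <= fall_start' n) by (unfold fall_start'; apply Z.div_pos; nia).
  assert (Q3 : (p + 1) * (n + 2) <= 2 * p * (n - 2)) by nia.
  assert (Q5 : fall_start' n <= fall_start n).
  { assert (2 * p * fall_start' n < 2 * p * fall_start n) by nia. nia. }
  assert (Q6 : fall_start n <= n - 1).
  { assert (2 * p * (fall_start n - 1) <= 2 * p * (n - 2)) by lia. nia. }
  assert (HB : n - 2 + δ < Z.of_nat (Z.to_nat (Defs.bound p n))).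
  { unfold Defs.bound. rewrite Z.abs_eq, Z2Nat.id by nia. nia. }
  unfold fall_length.
  enough (n - 2 + δ - fall_start n + 1 - 2 * m
          < m * congr_count (falling n) K m (Z.to_nat (Defs.bound p n))
          < n - 2 + δ - fall_start' n + 1 + m) by lia.
  apply count_congr_sandwich; try lia.
  - intros x. apply b2z_range.
  - intros x. apply (falling_support n x Hn).
  - intros x. apply (falling_support n x Hn).
Qed.

Lemma endpoint_slack n : 10 <= n ->
  0 <= rise_end' n - rise_end n <= 4 * p + 5 /\ 0 <= fall_start n - fall_start' n <= 7.
Proof.
  intros Hn. unfold rise_end, rise_end', fall_start, fall_start'.
  pose proof (Z.mod_pos_bound ((p + 1) * (n + 2)) (2 * p) ltac:(lia)).
  pose proof (Z.div_mod ((p + 1) * (n + 2)) (2 * p) ltac:(lia)).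
  pose proof (Z.mod_pos_bound ((p + 1) * (n - 6)) (2 * p) ltac:(lia)).
  pose proof (Z.div_mod ((p + 1) * (n - 6)) (2 * p) ltac:(lia)).
  pose proof (Z.mod_pos_bound ((p + 1) * (n - 5)) 2 ltac:(lia)).
  pose proof (Z.div_mod ((p + 1) * (n - 5)) 2 ltac:(lia)).
  pose proof (Z.mod_pos_bound ((p + 1) * (n + 3)) 2 ltac:(lia)).
  pose proof (Z.div_mod ((p + 1) * (n + 3)) 2 ltac:(lia)).
  split; nia.
Qed.

Lemma rise_fall_length_diff n : 10 <= n ->
  Z.abs (2 * p * (rise_length n - fall_length n) - n * (p - 1) * (p - 1)) <= 2 * p * (3 * p + 10).
Proof.
  intros Hn. pose proof delta_eps_range. unfold rise_length, fall_length, rise_end, fall_start.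
  pose proof (Z.mod_pos_bound ((p + 1) * (n + 2)) (2 * p) ltac:(lia)).
  pose proof (Z.div_mod ((p + 1) * (n + 2)) (2 * p) ltac:(lia)).
  pose proof (Z.mod_pos_bound ((p + 1) * (n - 5)) 2 ltac:(lia)).
  pose proof (Z.div_mod ((p + 1) * (n - 5)) 2 ltac:(lia)).
  nia.
Qed.

Open Scope R_scope.

Lemma level_step_approx n K i : (10 <= n)%Z -> (0 <= i)%Z ->
  Rabs (IZR (congr_count (rising n) K (p ^ i) (Z.to_nat (Defs.bound p n))
             - congr_count (falling n) K (p ^ i) (Z.to_nat (Defs.bound p n)))
        - IZR (rise_length n - fall_length n) / IZR p ^ Z.to_nat i) <= 4 * IZR p + 16.
Proof.
  intros Hn Hi. set (m := (p ^ i)%Z).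
  assert (Hm : (1 <= m)%Z) by (unfold m; pose proof (Z.pow_pos_nonneg p i ltac:(lia) Hi); lia).
  pose proof (rising_count_approx n K m Hn Hm). pose proof (falling_count_approx n K m Hn Hm).
  pose proof (endpoint_slack n Hn).
  set (cA := congr_count (rising n) K m _) in *. set (cB := congr_count (falling n) K m _) in *.
  assert (Hz : (Z.abs (m * (cA - cB) - (rise_length n - fall_length n)) <= 4 * p + 12 + 4 * m)%Z)
    by lia.
  apply IZR_le in Hz. rewrite abs_IZR, minus_IZR, mult_IZR, !plus_IZR, !mult_IZR in Hz.
  assert (Em : IZR p ^ Z.to_nat i = IZR m) by (unfold m; rewrite pow_IZR; do 2 f_equal; lia).
  assert (HmR : 1 <= IZR m) by (apply IZR_le; lia).
  assert (HpR : 11 <= IZR p) by (apply IZR_le; lia).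
  rewrite Em.
  replace (IZR (cA - cB) - IZR (rise_length n - fall_length n) / IZR m)
    with ((IZR m * IZR (cA - cB) - IZR (rise_length n - fall_length n)) / IZR m) by (field; lra).
  unfold Rdiv. rewrite Rabs_mult, Rabs_inv, (Rabs_right (IZR m)) by lra.
  apply Rle_div_l; [lra|]. nra.
Qed.

Lemma geometric_main_term (P X n T : R) : P >= 11 -> n >= 10 -> T >= 1 -> n * (P - 1) <= 2 * T ->
  Rabs (2 * P * X - n * (P - 1) * (P - 1)) <= 2 * P * (3 * P + 10) ->
  Rabs (X * (1 - / T) * P / (P - 1) - (P - 1) * n / 2) <= 4 * P + 12.
Proof.
  intros HP Hn HT HnT Hr. set (r := 2 * P * X - n * (P - 1) * (P - 1)) in Hr.
  assert (Hu : 0 < / T <= 1).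
  { split; [apply Rinv_0_lt_compat; lra|]. rewrite <- Rinv_1. apply Rinv_le_contravar; lra. }
  replace (X * (1 - / T) * P / (P - 1) - (P - 1) * n / 2)
    with (r * (1 - / T) / (2 * (P - 1)) - n * (P - 1) / T / 2) by (unfold r; field; lra).
  unfold Rminus at 1. eapply Rle_trans; [apply Rabs_triang|]. rewrite Rabs_Ropp.
  assert (A1 : Rabs (r * (1 - / T) / (2 * (P - 1))) <= 3 * P + 15).
  { unfold Rdiv. rewrite !Rabs_mult, Rabs_inv, (Rabs_right (1 - / T)), (Rabs_right (2 * (P - 1)))
      by lra.
    apply Rle_div_l; [lra|]. pose proof (Rabs_pos r). nra. }
  assert (A2 : Rabs (n * (P - 1) / T / 2) <= 1).
  { rewrite Rabs_right; [|apply Rle_ge; repeat apply Rdiv_le_0_compat; nra].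
    apply Rle_div_l; [lra|]. apply Rle_div_l; lra. }
  lra.
Qed.

(* The levels [i < N] contribute a geometric series summing to [(p - 1) n / 2]. *)
Lemma vg_step_approx n K (N : nat) : (10 <= n)%Z ->
  (forall x, (0 <= x < Defs.bound p n)%Z -> x <> K ->
     (Z.abs ((K - x) * (p - 1)) < p ^ Z.of_nat N)%Z) ->
  (n * (p - 1) <= 2 * p ^ Z.of_nat N)%Z ->
  Rabs (IZR (vg p a s n K - vg p a s (n - 1) K) - (IZR p - 1) * IZR n / 2)
    <= (INR N + 1) * (10 * IZR p).
Proof.
  intros Hn HN HT.
  assert (HpR : IZR p >= 11) by (apply Rle_ge, IZR_le; lia).
  rewrite (vg_step_as_levels n K N), IZR_sumZ by (auto; lia).
  set (X := IZR (rise_length n - fall_length n)).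
  set (B := Z.to_nat (Defs.bound p n)).
  assert (Hlevels : Rabs (sumR (fun i => IZR (congr_count (rising n) K (p ^ i) B
                                              - congr_count (falling n) K (p ^ i) B)) N
                          - sumR (fun i => X / (IZR p ^ Z.to_nat i)) N)
                    <= INR N * (4 * IZR p + 16)).
  { apply sumR_close. intros i Hi. apply level_step_approx; lia. }
  rewrite sumR_geom in Hlevels by lra.
  assert (Hmain : Rabs (X * (1 - / IZR p ^ N) * IZR p / (IZR p - 1) - (IZR p - 1) * IZR n / 2)
                  <= 4 * IZR p + 12).
  { apply geometric_main_term.
    - exact HpR.
    - apply Rle_ge, IZR_le. lia.
    - rewrite pow_IZR. apply Rle_ge, IZR_le.
      pose proof (Z.pow_pos_nonneg p (Z.of_nat N) ltac:(lia) ltac:(lia)). lia.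
    - rewrite pow_IZR, <- !minus_IZR, <- !mult_IZR. apply IZR_le. lia.
    - unfold X.
      replace (2 * IZR p * IZR (rise_length n - fall_length n) - IZR n * (IZR p - 1) * (IZR p - 1))
        with (IZR (2 * p * (rise_length n - fall_length n) - n * (p - 1) * (p - 1)))
        by (rewrite !minus_IZR, !mult_IZR, !minus_IZR; ring).
      replace (2 * IZR p * (3 * IZR p + 10)) with (IZR (2 * p * (3 * p + 10)))
        by (rewrite !mult_IZR, plus_IZR, mult_IZR; ring).
      rewrite <- abs_IZR. apply IZR_le, rise_fall_length_diff. lia. }
  pose proof (pos_INR N).
  set (Y := X * (1 - / IZR p ^ N) * IZR p / (IZR p - 1)) in *.
  set (Z0 := sumR _ N) in *.
  replace (Z0 - (IZR p - 1) * IZR n / 2) with ((Z0 - Y) + (Y - (IZR p - 1) * IZR n / 2)) by ring.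
  eapply Rle_trans; [apply Rabs_triang|]. nra.
Qed.

(** * [Δ'_k] and [Δ_k] are close to a quadratic *)

Definition half_dIw K : Z := K + 1 - δ.
Definition half_dnew K : Z := (dnew p a s K / 2)%Z.

(* [lin_coeff] makes the increments [(p - 1) l / 2 + lin_coeff] of [model] the main terms of
   those of [Dprime] (see [Dprime_step_approx]). *)
Definition lin_coeff : R := ((IZR p - 1) * (1 - IZR δ) - IZR (k_eps p a s) + 2) / 2.
Definition model (l : Z) : R := (IZR p - 1) / 4 * IZR l * (IZR l + 1) + lin_coeff * IZR l.
Definition model_shift K : R := Dprime p a s K (- half_dnew K) - model (- half_dnew K).

Definition levels K : nat := Z.to_nat (Z.log2 (p * (K + (p + 1) * (2 * K + 5) + p)) + 1).
Definition step_error K : R := (INR (levels K) + 1) * (10 * IZR p).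
Definition hull_error K : R := IZR (2 * half_dnew K) * step_error K.

Lemma dIw_half K : (dIw K / 2 = half_dIw K)%Z.
Proof.
  unfold Defs.dIw, half_dIw.
  replace (2 * K + 2 - 2 * δ)%Z with ((K + 1 - δ) * 2)%Z by ring. apply Z.div_mul. lia.
Qed.

Lemma half_dnew_eq K : half_dnew K = (half_dIw K - dur K)%Z.
Proof.
  unfold half_dnew, dnew, Defs.dIw, half_dIw.
  replace (2 * K + 2 - 2 * δ - 2 * dur K)%Z with ((K + 1 - δ - dur K) * 2)%Z by ring.
  apply Z.div_mul. lia.
Qed.

Lemma dnew_eq K : dnew p a s K = (2 * half_dnew K)%Z.
Proof. rewrite half_dnew_eq. unfold dnew, Defs.dIw, half_dIw. ring. Qed.

Lemma dur_large K : (10 * p <= K)%Z -> (9 <= dur K)%Z.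
Proof. intros HK. pose proof (dur_approx K). nia. Qed.

Lemma levels_suffice K : (10 * p <= K)%Z ->
  (p * (K + (p + 1) * (2 * K + 5) + p) < p ^ Z.of_nat (levels K))%Z.
Proof.
  intros HK. unfold levels. set (R := (p * (K + (p + 1) * (2 * K + 5) + p))%Z).
  assert (HR : (0 < R)%Z) by (unfold R; nia).
  rewrite Z2Nat.id by (pose proof (Z.log2_nonneg R); lia).
  apply Z.lt_le_trans with (2 ^ (Z.log2 R + 1))%Z.
  - rewrite Z.add_1_r. apply Z.log2_spec. auto.
  - apply Z.pow_le_mono_l. pose proof (Z.log2_nonneg R). lia.
Qed.

Lemma Dprime_step_approx K l : (10 * p <= K)%Z -> (- half_dnew K < l <= half_dnew K)%Z ->
  Rabs (Dprime p a s K l - Dprime p a s K (l - 1) - (model l - model (l - 1)))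
    <= step_error K.
Proof.
  intros HK Hl. pose proof (dur_large K HK). pose proof delta_eps_range.
  pose proof (half_dnew_eq K). pose proof (dur_approx K).
  set (n := (half_dIw K + l)%Z).
  assert (Hn : (10 <= n)%Z) by (unfold n; lia).
  assert (HnK : (n <= 2 * K + 2)%Z) by (unfold n, half_dIw in *; lia).
  pose proof (levels_suffice K HK).
  assert (Hbound : (Defs.bound p n <= (p + 1) * (2 * K + 5) + p)%Z)
    by (unfold Defs.bound; rewrite Z.abs_eq by lia; nia).
  pose proof (vg_step_approx n K (levels K) Hn) as Hstep.
  specialize (Hstep ltac:(intros x Hx HxK; rewrite Z.abs_mul, (Z.abs_eq (p - 1)) by lia; nia)
                    ltac:(nia)).
  unfold Dprime. rewrite !dIw_half.
  replace (half_dIw K + (l - 1))%Z with (n - 1)%Z by (unfold n; lia). fold n.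
  unfold step_error.
  replace (IZR (vg p a s n K) - (IZR (kof p a s K) - 2) / 2 * IZR l -
     (IZR (vg p a s (n - 1) K) - (IZR (kof p a s K) - 2) / 2 * IZR (l - 1))
     - (model l - model (l - 1)))
   with (IZR (vg p a s n K - vg p a s (n - 1) K) - (IZR p - 1) * IZR n / 2); auto.
  unfold model, lin_coeff, n, half_dIw, kof.
  repeat rewrite ?minus_IZR, ?plus_IZR, ?mult_IZR. field.
Qed.

Lemma Dprime_near_model K l : (10 * p <= K)%Z -> (- half_dnew K <= l <= half_dnew K)%Z ->
  Rabs (Dprime p a s K l - (model l + model_shift K))
    <= hull_error K.
Proof.
  intros HK Hl.
  assert (Htel : Rabs ((Dprime p a s K l - model l) - model_shift K)
                 <= IZR (l + half_dnew K) * step_error K).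
  { apply (Rabs_telescope_le (fun x => Dprime p a s K x - model x)); auto. intros l' Hl'.
    replace (Dprime p a s K l' - model l' - (Dprime p a s K (l' - 1) - model (l' - 1)))
      with (Dprime p a s K l' - Dprime p a s K (l' - 1) - (model l' - model (l' - 1))) by ring.
    now apply Dprime_step_approx. }
  assert (0 <= step_error K).
  { unfold step_error. pose proof (pos_INR (levels K)).
    assert (11 <= IZR p) by (apply IZR_le; lia). nra. }
  assert (IZR (l + half_dnew K) <= IZR (2 * half_dnew K)) by (apply IZR_le; lia).
  replace (Dprime p a s K l - (model l + model_shift K))
    with ((Dprime p a s K l - model l) - model_shift K) by ring.
  unfold hull_error. eapply Rle_trans; [exact Htel|]. apply Rmult_le_compat_r; lra.
Qed.

Lemma Delta_near_model K l : (10 * p <= K)%Z -> (- half_dnew K <= l <= half_dnew K)%Z ->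
  Rabs (Defs.Delta p a s K l - (model l + model_shift K))
    <= hull_error K.
Proof.
  intros HK Hl. rewrite Delta_hull.
  apply (hull_near_chord_convex _ _ (fun x => model x + _)); auto.
  - intros x Hx. now apply Dprime_near_model.
  - apply quadratic_chord_convex. assert (11 <= IZR p) by (apply IZR_le; lia). lra.
Qed.

Lemma sigma_approx K l h : (10 * p <= K)%Z -> (1 <= h)%Z -> (1 <= l)%Z ->
  (l + h <= half_dnew K)%Z ->
  Rabs (Defs.sigma p a s K l - ((IZR p - 1) * IZR l / 2 + lin_coeff))
    <= (IZR p - 1) / 4 * (IZR h + 1) + 2 * hull_error K / IZR h.
Proof.
  intros HK Hh Hl Hlh.
  assert (Hq : Rabs ((IZR p - 1) / 4) = (IZR p - 1) / 4).
  { apply Rabs_right. assert (11 <= IZR p) by (apply IZR_le; lia). lra. }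
  rewrite <- Hq. unfold Defs.sigma.
  replace ((IZR p - 1) * IZR l / 2) with (2 * ((IZR p - 1) / 4) * IZR l) by field.
  apply (convex_near_quadratic_slope (half_dnew K) _ _ _ (model_shift K)); try lia.
  - apply hull_convex.
  - intros x Hx. now apply Delta_near_model.
Qed.

(** * The points of [Z'_k] *)

Lemma k_eps_range : (2 <= k_eps p a s <= p)%Z.
Proof. unfold k_eps. pose proof (res_range (a + 2 * s)). lia. Qed.

Lemma half_dnew_facts K : (10 * p <= K)%Z ->
  (K <= 2 * half_dnew K <= 2 * K + 2)%Z /\
  (Z.abs ((p + 1) * half_dnew K - kof p a s K) <= 6 * p + 6)%Z /\
  (K * (p - 1) <= kof p a s K)%Z.
Proof.
  intros HK. rewrite half_dnew_eq. pose proof (dur_approx K). pose proof delta_eps_range.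
  pose proof k_eps_range. pose proof (dur_large K HK). unfold half_dIw, kof.
  assert (HX : ((p + 1) * (2 * dur K) <= (p + 1) * K)%Z) by nia.
  apply Z.mul_le_mono_pos_l in HX; [|lia].
  split; [lia|]. split; [|lia].
  assert (0 <= (p + 1) * (1 - δ) <= p + 1)%Z by nia. nia.
Qed.

Lemma zpt_close K l h : (10 * p <= K)%Z -> (1 <= h)%Z -> (1 <= l)%Z -> (l + h <= half_dnew K)%Z ->
  Rabs (zpt p a s K l - IZR l / IZR (half_dnew K)) <=
   2 * (IZR p + 1) / ((IZR p - 1) * IZR (kof p a s K)) *
     ((IZR p - 1) / 4 * (IZR h + 1) + Rabs lin_coeff + 2 * hull_error K / IZR h)
   + Rabs ((IZR p + 1) * IZR (half_dnew K) / IZR (kof p a s K) - 1).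
Proof.
  intros HK Hh Hl Hlh. pose proof (sigma_approx K l h HK Hh Hl Hlh) as Hsig.
  destruct (half_dnew_facts K HK) as [H1 [H2 H3]].
  set (D := half_dnew K) in *. set (k := kof p a s K) in *.
  assert (HP : 11 <= IZR p) by (apply IZR_le; lia).
  assert (Hk : 0 < IZR k) by (apply IZR_lt; nia).
  assert (HD : 0 < IZR D) by (apply IZR_lt; lia).
  assert (HlD : 0 <= IZR l / IZR D <= 1).
  { assert (0 <= IZR l <= IZR D) by (split; apply IZR_le; lia).
    split; [apply Rdiv_le_0_compat|apply Rle_div_l]; lra. }
  set (sg := Defs.sigma p a s K l) in *.
  set (kap := 2 * (IZR p + 1) / ((IZR p - 1) * IZR k)).
  assert (Hkap : 0 < kap) by (apply Rdiv_lt_0_compat; nra).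
  replace (zpt p a s K l - IZR l / IZR D)
    with (kap * (sg - (IZR p - 1) * IZR l / 2) + IZR l / IZR D * ((IZR p + 1) * IZR D / IZR k - 1))
    by (unfold zpt, kap, sg; fold k; field; repeat split; lra).
  eapply Rle_trans; [apply Rabs_triang|].
  rewrite !Rabs_mult, (Rabs_right kap), (Rabs_right (IZR l / IZR D)) by lra.
  apply Rplus_le_compat.
  - apply Rmult_le_compat_l; [lra|].
    pose proof (Rabs_triang (sg - ((IZR p - 1) * IZR l / 2 + lin_coeff)) lin_coeff).
    replace (sg - ((IZR p - 1) * IZR l / 2 + lin_coeff) + lin_coeff)
      with (sg - (IZR p - 1) * IZR l / 2) in * by ring.
    lra.
  - pose proof (Rabs_pos ((IZR p + 1) * IZR D / IZR k - 1)). nra.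
Qed.

Lemma zpt_error_budget (P K k D m N c cp : R) :
  11 <= P -> 10 <= m -> m * m * m <= K -> K * (P - 1) <= k -> 0 <= N <= m + cp -> 0 <= cp ->
  K <= 2 * D <= 2 * K + 2 -> Rabs ((P + 1) * D - k) <= 6 * P + 6 ->
  2 * (P + 1) / ((P - 1) * k) *
    ((P - 1) / 4 * (m * m + 1) + Rabs c + 2 * (2 * D * ((N + 1) * (10 * P))) / (m * m))
  + Rabs ((P + 1) * D / k - 1)
  <= ((P - 1) / 2 + Rabs c + 8 + 80 * P * (cp + 2)) / m.
Proof.
  intros HP Hm HK Hk HN Hcp HD Hdiff.
  assert (Hmm : 100 <= m * m) by nra.
  assert (Hmmm : 1000 <= m * m * m) by nra.
  assert (Hm3 : m <= K) by nra.
  assert (Hkpos : 0 < k) by nra.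
  pose proof (Rabs_pos c).
  set (B := (P - 1) / 4 * (m * m + 1) + Rabs c + 2 * (2 * D * ((N + 1) * (10 * P))) / (m * m)).
  assert (HB : 0 <= B).
  { unfold B. assert (0 <= 2 * (2 * D * ((N + 1) * (10 * P))) / (m * m)).
    { apply Rdiv_le_0_compat; [|lra]. repeat apply Rmult_le_pos; lra. }
    assert (0 <= (P - 1) / 4 * (m * m + 1)) by (apply Rmult_le_pos; lra). lra. }
  assert (Hkap : 2 * (P + 1) / ((P - 1) * k) <= 1 / K)
    by (apply Rdiv_le_cross; nra).
  assert (Hshift : Rabs ((P + 1) * D / k - 1) <= 8 / K).
  { replace ((P + 1) * D / k - 1) with (((P + 1) * D - k) / k) by (field; lra).
    unfold Rdiv at 1. rewrite Rabs_mult, Rabs_inv, (Rabs_right k) by lra.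
    apply Rle_trans with ((6 * P + 6) / k).
    { apply Rmult_le_compat_r; [apply Rlt_le, Rinv_0_lt_compat|]; lra. }
    apply Rdiv_le_cross; nra. }
  assert (T1 : (P - 1) / 4 * (m * m + 1) / K <= (P - 1) / 2 / m) by (apply Rdiv_le_cross; nra).
  assert (T2 : Rabs c / K <= Rabs c / m) by (apply Rdiv_le_cross; nra).
  assert (T3 : 2 * (2 * D * ((N + 1) * (10 * P))) / (m * m) / K <= 80 * P * (cp + 2) / m).
  { replace (2 * (2 * D * ((N + 1) * (10 * P))) / (m * m) / K)
      with (40 * P * m * (D * (N + 1)) / (m * m * K * m)) by (field; lra).
    replace (80 * P * (cp + 2) / m) with (40 * P * m * (2 * K * ((cp + 2) * m)) / (m * m * K * m))
      by (field; lra).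
    apply Rmult_le_compat_r; [apply Rlt_le, Rinv_0_lt_compat; nra|].
    apply Rmult_le_compat_l; [nra|]. apply Rmult_le_compat; nra. }
  assert (T4 : 8 / K <= 8 / m) by (apply Rdiv_le_cross; nra).
  apply Rle_trans with (B / K + 8 / K).
  - apply Rplus_le_compat; [|exact Hshift].
    replace (B / K) with (1 / K * B) by (field; lra). apply Rmult_le_compat_r; lra.
  - replace (B / K) with ((P - 1) / 4 * (m * m + 1) / K + Rabs c / K
                         + 2 * (2 * D * ((N + 1) * (10 * P))) / (m * m) / K)
      by (unfold B; field; lra).
    replace (((P - 1) / 2 + Rabs c + 8 + 80 * P * (cp + 2)) / m)
      with ((P - 1) / 2 / m + Rabs c / m + 8 / m + 80 * P * (cp + 2) / m) by (field; lra).
    lra.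
Qed.

Definition log_scale K : Z := Z.log2 K.
Definition window K : Z := log_scale K * log_scale K.
Definition Kmin : Z := Z.max (10 * p) (2 ^ 10).
Definition level_slack : Z := Z.log2 (4 * p * p) + 2.
Definition rate : R := (IZR p - 1) / 2 + Rabs lin_coeff + 8 + 80 * IZR p * (IZR level_slack + 2).

Lemma log_scale_facts K : (Kmin <= K)%Z ->
  (10 <= log_scale K)%Z /\ (log_scale K * log_scale K * log_scale K <= K)%Z.
Proof.
  intros HK. unfold Kmin in HK. unfold log_scale.
  assert (H10 : (10 <= Z.log2 K)%Z).
  { change 10%Z with (Z.log2 (2 ^ 10)). apply Z.log2_le_mono. lia. }
  split; auto. pose proof (cube_le_pow2 _ H10). pose proof (Z.log2_spec K ltac:(lia)). lia.
Qed.

Lemma levels_le_log_scale K : (Kmin <= K)%Z -> (Z.of_nat (levels K) <= log_scale K + level_slack)%Z.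
Proof.
  intros HK. unfold Kmin in HK. unfold levels, log_scale, level_slack.
  set (R := (p * (K + (p + 1) * (2 * K + 5) + p))%Z).
  assert (HR : (0 < R)%Z) by (unfold R; nia).
  assert (HR' : (R <= 4 * p * p * K)%Z) by (unfold R; nia).
  pose proof (Z.log2_nonneg R). rewrite Z2Nat.id by lia.
  assert (Z.log2 R <= Z.log2 (4 * p * p * K))%Z by (apply Z.log2_le_mono; lia).
  assert (Z.log2 (4 * p * p * K) <= Z.log2 (4 * p * p) + Z.log2 K + 1)%Z
    by (apply Z.log2_mul_above; nia).
  lia.
Qed.

Lemma zpt_uniform_approx K l : (Kmin <= K)%Z -> (1 <= l)%Z -> (l + window K <= half_dnew K)%Z ->
  Rabs (zpt p a s K l - IZR l / IZR (half_dnew K)) <= rate / IZR (log_scale K).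
Proof.
  intros HK Hl Hlh. destruct (log_scale_facts K HK) as [Hm Hmmm].
  assert (HK10 : (10 * p <= K)%Z) by (unfold Kmin in HK; lia).
  destruct (half_dnew_facts K HK10) as [HD1 [HD2 HD3]].
  pose proof (levels_le_log_scale K HK).
  assert (Hh : (1 <= window K)%Z) by (unfold window; nia).
  eapply Rle_trans; [apply (zpt_close K l (window K)); auto|].
  unfold window, hull_error, step_error. rewrite !mult_IZR.
  apply (zpt_error_budget _ (IZR K)).
  - apply IZR_le. lia.
  - apply IZR_le. lia.
  - rewrite <- !mult_IZR. apply IZR_le. lia.
  - rewrite <- minus_IZR, <- mult_IZR. apply IZR_le. lia.
  - split; [apply pos_INR|]. rewrite INR_IZR_INZ, <- plus_IZR. apply IZR_le. lia.
  - apply IZR_le. unfold level_slack. pose proof (Z.log2_nonneg (4 * p * p)). lia.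
  - destruct HD1 as [HD1 HD1']. apply IZR_le in HD1, HD1'.
    rewrite mult_IZR in HD1. rewrite plus_IZR, !mult_IZR in HD1'. lra.
  - rewrite <- plus_IZR, <- mult_IZR, <- minus_IZR, <- abs_IZR.
    replace (6 * IZR p + 6) with (IZR (6 * p + 6)) by (rewrite plus_IZR, mult_IZR; ring).
    apply IZR_le. lia.
Qed.

Lemma rate_ge_8 : 8 <= rate.
Proof.
  unfold rate, level_slack. pose proof (Rabs_pos lin_coeff).
  assert (11 <= IZR p) by (apply IZR_le; lia).
  assert (0 <= IZR (Z.log2 (4 * p * p) + 2))
    by (apply IZR_le; pose proof (Z.log2_nonneg (4 * p * p)); lia).
  nra.
Qed.

Lemma zpt_sample_estimates K : (Kmin <= K)%Z ->
  (0 < half_dnew K)%Z /\ (0 <= window K)%Z /\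
  1 / IZR (half_dnew K) <= rate / IZR (log_scale K) /\
  IZR (window K) / IZR (half_dnew K) <= rate / IZR (log_scale K) /\
  forall l, (1 <= l <= half_dnew K - window K)%Z ->
    Rabs (zpt p a s K l - IZR l / IZR (half_dnew K)) <= rate / IZR (log_scale K).
Proof.
  intros HK. destruct (log_scale_facts K HK) as [Hm Hmmm].
  assert (HK10 : (10 * p <= K)%Z) by (unfold Kmin in HK; lia).
  destruct (half_dnew_facts K HK10) as [HD _].
  assert (Hmw : (log_scale K * window K <= 2 * half_dnew K)%Z) by (unfold window; lia).
  assert (HmR : 10 <= IZR (log_scale K)) by (apply IZR_le; lia).
  assert (HDR : 0 < IZR (half_dnew K)) by (apply IZR_lt; nia).
  pose proof rate_ge_8.
  repeat split; [nia|unfold window; nia| | |intros l Hl; apply zpt_uniform_approx; lia].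
  - apply Rdiv_le_cross; [lra|lra|].
    assert (IZR (log_scale K) <= 2 * IZR (half_dnew K)).
    { rewrite <- mult_IZR. apply IZR_le. unfold window in Hmw. nia. }
    nra.
  - apply Rdiv_le_cross; [lra|lra|].
    apply IZR_le in Hmw. rewrite !mult_IZR in Hmw.
    assert (0 <= IZR (window K)) by (apply IZR_le; unfold window; nia).
    nra.
Qed.

Lemma mu_int_as_average f K : (0 < half_dnew K)%Z ->
  mu_int p a s f K
  = sumR (fun j => f (zpt p a s K (1 + j))) (Z.to_nat (half_dnew K)) / IZR (half_dnew K).
Proof.
  intros HD. unfold mu_int. rewrite fold_right_Rplus_zrange. fold (half_dnew K).
  replace (half_dnew K - 1 + 1)%Z with (half_dnew K) by lia.
  rewrite dnew_eq, sumR_scal, mult_IZR.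
  assert (0 < IZR (half_dnew K)) by (apply IZR_lt; lia).
  field. lra.
Qed.

End Slopes.

Open Scope R_scope.

Lemma is_lim_seq_log2 : is_lim_seq (fun n => IZR (Z.log2 (Z.of_nat n))) p_infty.
Proof.
  apply is_lim_seq_spec. intros M. exists (Z.to_nat (2 ^ Z.max 0 (up M))). intros n Hn.
  destruct (archimed M) as [HM _].
  assert (Hlog : (Z.max 0 (up M) <= Z.log2 (Z.of_nat n))%Z).
  { rewrite <- (Z.log2_pow2 (Z.max 0 (up M))) at 1 by lia. apply Z.log2_le_mono.
    pose proof (Z.pow_pos_nonneg 2 (Z.max 0 (up M)) ltac:(lia) ltac:(lia)). lia. }
  apply Rlt_le_trans with (IZR (up M)); [exact HM|]. apply IZR_le. lia.
Qed.

Lemma is_lim_seq_div_log2 (c : R) : is_lim_seq (fun n => c / IZR (Z.log2 (Z.of_nat n))) 0.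
Proof.
  replace (Finite 0) with (Rbar_mult c (Rbar_inv p_infty)) by (simpl; f_equal; ring).
  apply is_lim_seq_scal_l, is_lim_seq_inv; [apply is_lim_seq_log2|discriminate].
Qed.

Theorem proposition3p21 (p a s : Z) :
  prime p -> (11 <= p)%Z -> (2 <= a <= p - 5)%Z -> (0 <= s <= p - 2)%Z ->
  forall f : R -> R,
    (forall x, continuous f x) ->
    (exists M, forall x, Rabs (f x) <= M) ->
    is_lim_seq (fun n : nat => mu_int p a s f (Z.of_nat n)) (RInt f 0 1).
Proof.
  (* No bound on [a] is needed: the paper uses it only to justify the dimension formulas, which
     are definitions here. *)
  intros Hp Hp11 _ Hs f Hc Hbd.
  assert (Hest : eventually (fun n => (Kmin p <= Z.of_nat n)%Z))
    by (exists (Z.to_nat (Kmin p)); intros n Hn; lia).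
  apply (is_lim_seq_ext_loc (fun n => sumR (fun j => f (zpt p a s (Z.of_nat n) (1 + j)))
           (Z.to_nat (half_dnew p a s (Z.of_nat n))) / IZR (half_dnew p a s (Z.of_nat n)))).
  - destruct Hest as [N HN]. exists N. intros n Hn. symmetry. apply mu_int_as_average.
    now apply (zpt_sample_estimates p a s Hp Hp11 Hs), HN.
  - apply (sample_average_tends_to_integral f (fun n => half_dnew p a s (Z.of_nat n))
             (fun n => window (Z.of_nat n)) (fun n => zpt p a s (Z.of_nat n))
             (fun n => rate p a s / IZR (log_scale (Z.of_nat n)))); auto.
    + apply is_lim_seq_div_log2.
    + destruct Hest as [N HN]. exists N. intros n Hn.
      apply (zpt_sample_estimates p a s Hp Hp11 Hs), HN, Hn.
Qed.
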